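(* Let $M\ge1$ and let $\mathbf u$ be the unit lift. Then: (i) $\hat\Phi_{\mathbf u}$ is increasing and maps $(q_G,q_T]\cap\mathcal V$ bijectively onto $\mathcal V^*$; (ii) $\hat\Phi_{\mathbf u}(q_{KL})=q_{KL}^*$; (iii) $\hat\Phi_{\mathbf u}(I_{n+1}\cap\mathcal V)=I_n^*\cap\mathcal V^*$ for all $n\ge0$.
   Context: Sequences and quasi-greedy expansions. $\Omega_M=\{0,\dots,M\}^{\mathbb N}$, with lexicographic order $\prec$ and left shift $\sigma$. For $q\in(1,M+1]$, $\alpha(q)$ is the lexicographically largest $(a_i)\in\Omega_M$ not ending in $0^\infty$ with $\sum a_iq^{-i}=1$. $\alpha^*$ denotes this map for $M=1$. Word operations. For a word $c_1\dots c_k$: - $c_1\dots c_k^\pm=c_1\dots c_{k-1}(c_k\pm1)$; - $\overline{c_1\dots c_k}=(M-c_1)\dots(M-c_k)$, and $\overline{(c_i)}=(M-c_i)$. The set $\mathcal V$. $\mathbf V=\{(c_i):\overline{(c_i)}\preceq\sigma^n((c_i))\preceq(c_i)\ \forall n\ge0\}$ and $\mathcal V=\{q\in(1,M+1]:\alpha(q)\in\mathbf V\}$. Starred objects ($\mathcal V^*$, $q^*_{KL}$, $I_n^*$) denote the corresponding objects for $M=1$. The unit lift. $\mathbf u=k$ if $M=2k$, and $\mathbf u=(k+1)k$ if $M=2k+1$. Special bases. - $q_G$ is given by $\alpha(q_G)=\mathbf u^\infty$. - Let $\tau_i$ ($i\ge0$) be the parity of the binary digit sum of $i$. Put $\lambda_i=k+\tau_i-\tau_{i-1}$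 if $M=2k$, and $\lambda_i=k+\tau_i$ if $M=2k+1$. Then $\alpha(q_{KL})=(\lambda_i)_{i\ge1}$. - For $n\ge1$, $\alpha(q_n')=\lambda_1\dots\lambda_N(\overline{\lambda_1\dots\lambda_N}^+)^\infty$, where $N=2^{n-1}$ if $M$ is even and $N=2^n$ if $M$ is odd. - $q_T=q_1'$, $q_0'=M+1$, and $I_n=(q_{n+1}',q_n']$. These satisfy $q_G<q_{KL}<q_{n+1}'<q_n'\le q_T$, and $\alpha(q_T)=\mathbf u^+(\overline{\mathbf u})^\infty$. The graph. Let $G$ have vertices Start, $A$, $B$ and edges - $e_0$: Start$\to A$, - $e_1$: $A\to B$, - $e_2$: $B\to B$, - $e_3$: $B\to A$, - $e_4$: $A\to A$. It carries two labelings: - $\mathcal L_{\mathbf u}$: $e_0,e_3\mapsto\mathbf u^+$; $e_1\mapsto\overline{\mathbf u^+}$; $e_2\mapsto\mathbf u$; $e_4\mapsto\overline{\mathbf u}$; - $\mathcal L^*$: $e_0,e_3,e_4\mapsto1$; $e_1,e_2\mapsto0$. $X_{\mathbf u}$ is the set of label concatenations along infinite paths starting with $e_0$. The maps. $\Phi_{\mathbf u}:X_{\mathbf u}\to\{x\in\{0,1\}^{\mathbb N}:x_1=1\}$ replaces each $\mathcal L_{\mathbf u}$-label on the path by its $\mathcal L^*$-label. For $q\in(q_G,q_T]\cap\mathcal V$ one has $\alpha(q)\in X_{\mathbf u}$, and $\hat\Phi_{\mathbf u}(q):=(\alpha^* )^{-1}(\Phi_{\mathbf u}(\alpha(q)))$.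 *)

(* concrete reals R, sequences as nat -> nat (0-indexed:
   the paper's a_i is stored at index i-1). *)
From Stdlib Require Import Reals Lra Lia Arith List ClassicalEpsilon.
Import ListNotations.
Open Scope R_scope.

Definition seqn := nat -> nat.

Definition in_Omega (M : nat) (a : seqn) : Prop := forall i, (a i <= M)%nat.

Definition lex_lt (a b : seqn) : Prop :=
  exists n, (forall i, (i < n)%nat -> a i = b i) /\ (a n < b n)%nat.
Definition lex_le (a b : seqn) : Prop := lex_lt a b \/ (forall i, a i = b i).

Definition shift (n : nat) (a : seqn) : seqn := fun i => a (n + i)%nat.

Definition bar_seq (M : nat) (a : seqn) : seqn := fun i => (M - a i)%nat.

Definition expands_one (q : R) (a : seqn) : Prop :=
  infinite_sum (fun i => INR (a i) / q ^ (S i)) 1.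

Definition not_end_zero (a : seqn) : Prop := forall n, exists i, (n <= i)%nat /\ a i <> 0%nat.

Definition qg_candidate (M : nat) (q : R) (a : seqn) : Prop :=
  in_Omega M a /\ not_end_zero a /\ expands_one q a.

Definition is_quasi_greedy (M : nat) (q : R) (a : seqn) : Prop :=
  qg_candidate M q a /\ forall b, qg_candidate M q b -> lex_le b a.

(* alpha(q) (for q in (1, M+1] it exists; junk otherwise) *)
Definition alpha (M : nat) (q : R) : seqn :=
  epsilon (inhabits (fun _ => 0%nat)) (is_quasi_greedy M q).

Definition in_Vseq (M : nat) (c : seqn) : Prop :=
  forall n, lex_le (bar_seq M c) (shift n c) /\ lex_le (shift n c) c.

Definition in_V (M : nat) (q : R) : Prop :=
  1 < q <= INR M + 1 /\ in_Vseq M (alpha M q).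

Definition base_of (M : nat) (a : seqn) : R :=
  epsilon (inhabits 0) (fun q => 1 < q <= INR M + 1 /\ forall i, alpha M q i = a i).

Definition word := list nat.
Definition bar_word (M : nat) (w : word) : word := map (fun c => (M - c)%nat) w.
Definition plus_word (w : word) : word := removelast w ++ [S (last w 0%nat)].

Definition unit_lift (M : nat) : word :=
  if Nat.even M then [Nat.div2 M] else [S (Nat.div2 M); Nat.div2 M].

Definition periodic (w : word) : seqn := fun i => nth (i mod length w) w 0%nat.

Definition qG (M : nat) : R := base_of M (periodic (unit_lift M)).

Fixpoint popc_aux (fuel n : nat) : nat :=
  match fuel with
  | O => O
  | S f => match n with O => O | _ => (n mod 2 + popc_aux f (n / 2))%nat end
  end.
Definition popcount (n : nat) : nat := popc_aux n n.
Definition tau (i : nat) : nat := if Nat.odd (popcount i) then 1%nat else 0%nat.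

Definition lambda (M i : nat) : nat :=
  if Nat.even M then (Nat.div2 M + tau i - tau (i - 1))%nat
  else (Nat.div2 M + tau i)%nat.

Definition kl_seq (M : nat) : seqn := fun j => lambda M (S j).
Definition qKL (M : nat) : R := base_of M (kl_seq M).

(* q'_n, n >= 1 : lambda_1..lambda_N (bar(lambda_1..lambda_N)^+)^infty *)
Definition blockN (M n : nat) : nat :=
  if Nat.even M then (2 ^ (n - 1))%nat else (2 ^ n)%nat.
Definition lam_word (M N : nat) : word := map (fun j => lambda M (S j)) (seq 0 N).
Definition qprime_seq (M n : nat) : seqn :=
  let N := blockN M n in
  fun j => if (j <? N)%nat then lambda M (S j)
           else periodic (plus_word (bar_word M (lam_word M N))) (j - N)%nat.
Definition qprime (M n : nat) : R :=
  match n with O => INR M + 1 | _ => base_of M (qprime_seq M n) end.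

Definition qT (M : nat) : R := qprime M 1.

Definition in_I (M n : nat) (q : R) : Prop := qprime M (S n) < q <= qprime M n.

Inductive vertex := VStart | VA | VB.
Inductive edge := e0 | e1 | e2 | e3 | e4.
Definition esrc (e : edge) : vertex :=
  match e with e0 => VStart | e1 => VA | e2 => VB | e3 => VB | e4 => VA end.
Definition etgt (e : edge) : vertex :=
  match e with e0 => VA | e1 => VB | e2 => VB | e3 => VA | e4 => VA end.

Definition label_u (M : nat) (e : edge) : word :=
  let u := unit_lift M in
  match e with
  | e0 | e3 => plus_word u
  | e1 => bar_word M (plus_word u)
  | e2 => u
  | e4 => bar_word M u
  end.
Definition label_star (e : edge) : nat :=
  match e with e0 | e3 | e4 => 1%nat | e1 | e2 => 0%nat end.

Definition is_path (p : nat -> edge) : Prop :=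
  p 0%nat = e0 /\ forall n, etgt (p n) = esrc (p (S n)).

(* x = L_u-label sequence of path p (all L_u labels have length |u|) *)
Definition path_label_u (M : nat) (p : nat -> edge) (x : seqn) : Prop :=
  forall n j, (j < length (unit_lift M))%nat ->
    x (length (unit_lift M) * n + j)%nat = nth j (label_u M (p n)) 0%nat.

Definition Phi_rel (M : nat) (x y : seqn) : Prop :=
  exists p, is_path p /\ path_label_u M p x /\ forall n, y n = label_star (p n).

(* hat Phi_u (q) := inverse of alpha-star applied to Phi_u (alpha q) *)
Definition hatPhi (M : nat) (q : R) : R :=
  epsilon (inhabits 0) (fun p => 1 < p <= 2 /\
     exists y, Phi_rel M (alpha M q) y /\ forall i, alpha 1 p i = y i).

Definition in_dom (M : nat) (q : R) : Prop := qG M < q <= qT M /\ in_V M q.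

(* Phi_u only relabels the edges of G, so it is inverted by an explicit
   substitution Psi_M on binary sequences: for M = 2k, Psi(y)_j = k + y_j - y_(j-1);
   for M = 2k+1, Psi(y) = ((k+1 - y_(j-1)) (k + y_j))_j, with y_(-1) = 0.  Psi is strictly
   increasing for the lexicographic order and turns reflection of y into reflection of
   Psi(y), so Psi(y) satisfies the V-condition iff y does; conversely every V-sequence
   strictly between u^oo = alpha(q_G) and Psi(1^oo) = alpha(q_T) is of the form Psi(y).
   Psi maps the Thue-Morse type sequences alpha*(q*_KL) and alpha*(q'*_n) to alpha(q_KL)
   and alpha(q'_(n+1)).  Finally q |-> alpha(q) is an increasing bijection from
   (1, M+1] onto the quasi-greedy sequences, and by Parry's criterion every V-sequence
   is quasi-greedy; so all statements about sequences transfer to the bases. *)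

From Coquelicot Require Import Coquelicot.
From Stdlib Require Import Reals Lra Lia Arith List Classical ClassicalEpsilon FunctionalExtensionality.
Import ListNotations.
Open Scope nat_scope.

(** * Lexicographic order *)

Lemma classic_least (P :
  nat -> Prop) : (exists n, P n) -> exists n, P n /\ forall m, (m < n)%nat -> ~ P m.
Proof.
  intros [n Hn]. revert Hn. induction n as [n IH] using lt_wf_ind. intros Hn.
  destruct (classic (exists m, (m < n)%nat /\ P m)) as [[m [Hm1 Hm2]]|H].
  - exact (IH m Hm1 Hm2).
  - exists n; split; auto. intros m Hm HP; apply H; eauto.
Qed.

Lemma lex_trichotomy (a b : seqn) : lex_lt a b \/ (forall i, a i = b i) \/ lex_lt b a.
Proof.
  destruct (classic (forall i, a i = b i)) as [H|H]; [right; left; exact H|].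
  apply not_all_ex_not in H.
  destruct (classic_least (fun i => a i <> b i) H) as [d [Hd1 Hd2]].
  assert (Heq : forall i, (i < d)%nat -> a i = b i).
  { intros i Hi. specialize (Hd2 i Hi). apply NNPP in Hd2. exact Hd2. }
  destruct (Nat.lt_gt_cases (a d) (b d)) as [[Hl|Hl] _]; auto.
  - left; exists d; auto.
  - right; right; exists d; split; auto. intros i Hi; symmetry; auto.
Qed.

Lemma lex_lt_irrefl a : ~ lex_lt a a.
Proof. intros [n [_ H]]; lia. Qed.

Lemma lex_lt_trans a b c : lex_lt a b -> lex_lt b c -> lex_lt a c.
Proof.
  intros [n [H1 H2]] [m [H3 H4]].
  destruct (Nat.lt_trichotomy n m) as [H|[H|H]].
  - exists n; split. intros i Hi; rewrite H1, H3; auto; lia. rewrite <- (H3 n H); auto.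
  - subst; exists m; split. intros i Hi; rewrite H1, H3; auto. lia.
  - exists m; split. intros i Hi; rewrite H1, H3; auto; lia. rewrite (H1 m H); auto.
Qed.

Lemma lex_lt_ext_l a a' b : (forall i, a i = a' i) -> lex_lt a b -> lex_lt a' b.
Proof. intros E [n [H1 H2]]; exists n; split; [intros i Hi; rewrite <- E; auto| rewrite <- E; auto]. Qed.
Lemma lex_lt_ext_r a b b' : (forall i, b i = b' i) -> lex_lt a b -> lex_lt a b'.
Proof. intros E [n [H1 H2]]; exists n; split; [intros i Hi; rewrite <- E; auto| rewrite <- E; auto]. Qed.

Lemma lex_le_trans a b c : lex_le a b -> lex_le b c -> lex_le a c.
Proof.
  intros [H1|H1] [H2|H2].
  - left; eapply lex_lt_trans; eauto.
  - left; eapply lex_lt_ext_r; eauto.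
  - left; eapply lex_lt_ext_l; [|eauto]. intros; symmetry; auto.
  - right; intros i; rewrite H1; auto.
Qed.

Lemma lex_lt_le_trans a b c : lex_lt a b -> lex_le b c -> lex_lt a c.
Proof. intros H1 [H2|H2]; [eapply lex_lt_trans; eauto| eapply lex_lt_ext_r; eauto]. Qed.

Lemma lex_lt_not_le a b : lex_lt a b -> ~ lex_le b a.
Proof. intros H1 H2. apply (lex_lt_irrefl a). eapply lex_lt_le_trans; eauto. Qed.

Lemma lex_not_lt_le a b : ~ lex_lt b a -> lex_le a b.
Proof.
  intros H. destruct (lex_trichotomy a b) as [H1|[H1|H1]]; [left|right|]; auto. contradiction.
Qed.

Lemma lex_le_refl a : lex_le a a.
Proof. right; auto. Qed.

Lemma lex_le_antisym a b : lex_le a b -> lex_le b a -> forall i, a i = b i.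
Proof.
  intros [H1|H1] H2; auto. exfalso; eapply lex_lt_not_le; eauto.
Qed.

Lemma lex_le_head a b : lex_le a b -> (a 0 <= b 0)%nat.
Proof.
  intros [[n [H1 H2]]|H]. destruct n. lia. rewrite H1; lia. rewrite H; lia.
Qed.

Lemma lex_lt_head a b : (a 0 < b 0)%nat -> lex_lt a b.
Proof. intros; exists 0%nat; split; auto; intros; lia. Qed.
Lemma lex_lt_second a b : a 0 = b 0 -> (a 1 < b 1)%nat -> lex_lt a b.
Proof. intros; exists 1%nat; split; auto; intros i Hi; replace i with 0%nat by lia; auto. Qed.

Lemma lex_le_pointwise a b : (forall i, (a i <= b i)%nat) -> lex_le a b.
Proof.
  intros H. apply lex_not_lt_le. intros [n [H1 H2]]. specialize (H n). lia.
Qed.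

Lemma lex_lt_common_prefix a b n : (forall i, (i < n)%nat -> a i = b i) ->
  (lex_lt a b <-> lex_lt (shift n a) (shift n b)).
Proof.
  intros E; unfold shift; split.
  - intros [d [H1 H2]]. assert (n <= d)%nat.
    { destruct (Nat.le_gt_cases n d); auto. rewrite E in H2; auto; lia. }
    exists (d - n)%nat; split.
    + intros i Hi; apply H1; lia.
    + replace (n + (d - n))%nat with d by lia; auto.
  - intros [d [H1 H2]]. exists (n + d)%nat; split; auto.
    intros i Hi. destruct (Nat.lt_ge_cases i n); auto.
    replace i with (n + (i - n))%nat by lia. apply H1; lia.
Qed.

Lemma lex_le_common_prefix a b n : (forall i, (i < n)%nat -> a i = b i) ->
  (lex_le a b <-> lex_le (shift n a) (shift n b)).
Proof.
  intros E; unfold lex_le; rewrite (lex_lt_common_prefix a b n E); split; intros [H|H]; auto; right.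
  - intros i; unfold shift; auto.
  - intros i; destruct (Nat.lt_ge_cases i n); auto.
    replace i with (n + (i - n))%nat by lia. apply H.
Qed.

Lemma lex_le_ext a a' b b' :
  (forall i, a i = a' i) -> (forall i, b i = b' i) -> lex_le a b -> lex_le a' b'.
Proof.
  intros Ea Eb H. eapply lex_le_trans; [|eapply lex_le_trans; [exact H|]].
  - right; intros; symmetry; auto.
  - right; auto.
Qed.

Lemma bar_lex_lt M a b :
  in_Omega M a -> in_Omega M b -> lex_lt a b -> lex_lt (bar_seq M b) (bar_seq M a).
Proof.
  intros Ha Hb [n [H1 H2]]. exists n; unfold bar_seq; split.
  - intros i Hi; rewrite H1; auto.
  - specialize (Hb n); lia.
Qed.
Lemma bar_lex_le M a b :
  in_Omega M a -> in_Omega M b -> lex_le a b -> lex_le (bar_seq M b) (bar_seq M a).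
Proof.
  intros Ha Hb [H|H]. left; apply bar_lex_lt; auto. right; intros i; unfold bar_seq; rewrite H; auto.
Qed.
Lemma shift_Omega M a n : in_Omega M a -> in_Omega M (shift n a).
Proof. intros H i; apply H. Qed.

Lemma Vseq_not_end_zero M a : (1 <= M)%nat -> in_Omega M a -> in_Vseq M a -> not_end_zero a.
Proof.
  intros HM Ha HV n. apply NNPP; intros H.
  assert (Z : forall i, (n <= i)%nat -> a i = 0%nat).
  { intros i Hi. apply NNPP; intros H'. apply H; exists i; auto. }
  destruct (HV n) as [H1 _].
  assert (E := lex_le_pointwise (shift n a) (bar_seq M a)).
  assert (lex_le (shift n a) (bar_seq M a)) as H2.
  { apply E; intros i; unfold shift; rewrite Z; lia. }
  assert (E2 := lex_le_antisym _ _ H1 H2 n). unfold bar_seq, shift in E2.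
  rewrite Z in E2 by lia. rewrite Z in E2 by lia. lia.
Qed.

(** * The substitution Psi *)

(* [prev_digit c y j] is y_(j-1) with y_(-1) := c; the start value c = 1 arises for
   reflections, see [bar_Psi_from]. *)
Definition prev_digit (c : nat) (y : seqn) (j : nat) : nat := match j with 0 => c | S j' => y j' end.
Definition binary (y : seqn) : Prop := forall i, (y i <= 1)%nat.
Definition Psi_from (M c : nat) (y : seqn) : seqn := fun j =>
  if Nat.even M then (Nat.div2 M + y j - prev_digit c y j)%nat
  else if Nat.even j then (S (Nat.div2 M) - prev_digit c y (Nat.div2 j))%nat
  else (Nat.div2 M + y (Nat.div2 j))%nat.
Definition Psi M y := Psi_from M 0 y.
Definition Psi_odd_tail (M : nat) (z : seqn) : seqn := fun j =>
  if Nat.even j then (Nat.div2 M + z (Nat.div2 j))%nat else (S (Nat.div2 M) - z (Nat.div2 j))%nat.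
Definition bar1 := bar_seq 1.

Lemma nat_even_odd (i : nat) : exists j, i = (2*j)%nat \/ i = (2*j+1)%nat.
Proof. destruct (Nat.Even_or_Odd i) as [[j H]|[j H]]; exists j; lia. Qed.

Lemma even_div2 M : Nat.even M = true -> M = (2 * Nat.div2 M)%nat.
Proof.
  intros H. pose proof (Nat.div2_odd M) as E. rewrite <- Nat.negb_even, H in E. simpl in E. lia.
Qed.
Lemma odd_div2 M : Nat.even M = false -> M = (2 * Nat.div2 M + 1)%nat.
Proof.
  intros H. pose proof (Nat.div2_odd M) as E. rewrite <- Nat.negb_even, H in E. simpl in E. lia.
Qed.

Lemma Psi_from_evenM M c y j :
  Nat.even M = true -> Psi_from M c y j = (Nat.div2 M + y j - prev_digit c y j)%nat.
Proof. intros H; unfold Psi_from; rewrite H; reflexivity. Qed.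
Lemma Psi_from_oddM_even M c y j :
  Nat.even M = false -> Psi_from M c y (2*j) = (S (Nat.div2 M) - prev_digit c y j)%nat.
Proof. intros H; unfold Psi_from; rewrite H, Nat.even_even, Nat.div2_double; reflexivity. Qed.
Lemma Psi_from_oddM_odd M c y j : Nat.even M = false -> Psi_from M c y (2*j+1) = (Nat.div2 M + y j)%nat.
Proof. intros H; unfold Psi_from; rewrite H, Nat.even_odd, Nat.div2_odd'; reflexivity. Qed.
Lemma Psi_odd_tail_even M z j : Psi_odd_tail M z (2*j) = (Nat.div2 M + z j)%nat.
Proof. unfold Psi_odd_tail; rewrite Nat.even_even, Nat.div2_double; reflexivity. Qed.
Lemma Psi_odd_tail_odd M z j : Psi_odd_tail M z (2*j+1) = (S (Nat.div2 M) - z j)%nat.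
Proof. unfold Psi_odd_tail; rewrite Nat.even_odd, Nat.div2_odd'; reflexivity. Qed.

Lemma prev_digit_binary c y j : (c <= 1)%nat -> binary y -> (prev_digit c y j <= 1)%nat.
Proof. intros; destruct j; simpl; auto. Qed.

Lemma shift_Psi_from_evenM M c y n : Nat.even M = true ->
  forall i, shift n (Psi_from M c y) i = Psi_from M (prev_digit c y n) (shift n y) i.
Proof.
  intros H i; unfold shift; rewrite !Psi_from_evenM by auto. unfold shift.
  destruct i; simpl. rewrite Nat.add_0_r; reflexivity.
  rewrite Nat.add_succ_r; reflexivity.
Qed.

Lemma shift_even_Psi_from_oddM M c y n : Nat.even M = false ->
  forall i, shift (2*n) (Psi_from M c y) i = Psi_from M (prev_digit c y n) (shift n y) i.
Proof.
  intros H i; unfold shift. destruct (nat_even_odd i) as [j [->| ->]].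
  - replace (2*n + 2*j)%nat with (2*(n+j))%nat by lia. rewrite !Psi_from_oddM_even by auto.
    destruct j; simpl. rewrite Nat.add_0_r; reflexivity. unfold shift.
    rewrite Nat.add_succ_r; reflexivity.
  - replace (2*n + (2*j+1))%nat with (2*(n+j)+1)%nat by lia. rewrite !Psi_from_oddM_odd by auto.
    reflexivity.
Qed.

Lemma shift_odd_Psi_from_oddM M c y n : Nat.even M = false ->
  forall i, shift (2*n+1) (Psi_from M c y) i = Psi_odd_tail M (shift n y) i.
Proof.
  intros H i; unfold shift. destruct (nat_even_odd i) as [j [->| ->]].
  - replace (2*n+1 + 2*j)%nat with (2*(n+j)+1)%nat by lia.
    rewrite Psi_from_oddM_odd, Psi_odd_tail_even by auto. reflexivity.
  - replace (2*n+1 + (2*j+1))%nat with (2*(S (n+j)))%nat by lia.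
    rewrite Psi_from_oddM_even, Psi_odd_tail_odd by auto.
    simpl. unfold shift. reflexivity.
Qed.

Lemma bar_Psi_from M c y : (1 <= M)%nat -> (c <= 1)%nat -> binary y ->
  forall i, bar_seq M (Psi_from M c y) i = Psi_from M (1 - c) (bar1 y) i.
Proof.
  intros HM Hc Hy i. unfold bar_seq.
  assert (Hp : forall j, prev_digit (1 - c) (bar1 y) j = (1 - prev_digit c y j)%nat)
    by (intros [|j]; reflexivity).
  destruct (Nat.even M) eqn:E.
  - rewrite !Psi_from_evenM by auto. rewrite Hp. pose proof (even_div2 M E).
    pose proof (prev_digit_binary c y i Hc Hy).
    pose proof (Hy i). unfold bar1, bar_seq. lia.
  - pose proof (odd_div2 M E). destruct (nat_even_odd i) as [j [->| ->]].
    + rewrite !Psi_from_oddM_even by auto. rewrite Hp. pose proof (prev_digit_binary c y j Hc Hy). lia.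
    + rewrite !Psi_from_oddM_odd by auto. pose proof (Hy j). unfold bar1, bar_seq. lia.
Qed.

Lemma Psi_from_Omega M c y : (1 <= M)%nat -> binary y -> in_Omega M (Psi_from M c y).
Proof.
  intros HM Hy i. destruct (Nat.even M) eqn:E.
  - rewrite Psi_from_evenM by auto. pose proof (even_div2 M E). pose proof (Hy i). lia.
  - pose proof (odd_div2 M E). destruct (nat_even_odd i) as [j [->| ->]].
    + rewrite Psi_from_oddM_even by auto. lia.
    + rewrite Psi_from_oddM_odd by auto. pose proof (Hy j). lia.
Qed.

Lemma bar1_binary y : binary (bar1 y).
Proof. intros i; unfold bar1, bar_seq; lia. Qed.
Lemma shift_binary y n : binary y -> binary (shift n y).
Proof. intros H i; apply H. Qed.

Lemma Psi_from_lex_lt M c z z' : (1 <= M)%nat -> (c <= 1)%nat -> binary z -> binary z' ->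
  lex_lt z z' -> lex_lt (Psi_from M c z) (Psi_from M c z').
Proof.
  intros HM Hc Hz Hz' [d [H1 H2]].
  assert (Hpv : forall j, (j <= d)%nat -> prev_digit c z j = prev_digit c z' j).
  { intros [|j] Hj; simpl; [reflexivity|]. apply H1; lia. }
  destruct (Nat.even M) eqn:E.
  - exists d; split.
    + intros i Hi; rewrite !Psi_from_evenM by auto. rewrite H1, Hpv by lia. reflexivity.
    + rewrite !Psi_from_evenM by auto. rewrite Hpv by lia. pose proof (even_div2 M E).
      pose proof (prev_digit_binary c z' d Hc Hz'). lia.
  - exists (2*d+1)%nat; split.
    + intros i Hi. destruct (nat_even_odd i) as [j [->| ->]].
      * rewrite !Psi_from_oddM_even by auto. rewrite Hpv by lia. reflexivity.
      * rewrite !Psi_from_oddM_odd by auto. rewrite H1 by lia. reflexivity.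
    + rewrite !Psi_from_oddM_odd by auto. lia.
Qed.

Lemma Psi_from_lex_le M c z z' : (1 <= M)%nat -> (c <= 1)%nat -> binary z -> binary z' ->
  lex_le z z' -> lex_le (Psi_from M c z) (Psi_from M c z').
Proof.
  intros HM Hc Hz Hz' [H|H]. left; apply Psi_from_lex_lt; auto.
  right. intros i. assert (z = z') by (apply functional_extensionality; auto). subst; auto.
Qed.

Lemma Psi_from_lex_le_rev M c z z' : (1 <= M)%nat -> (c <= 1)%nat -> binary z -> binary z' ->
  lex_le (Psi_from M c z) (Psi_from M c z') -> lex_le z z'.
Proof.
  intros HM Hc Hz Hz' H. apply lex_not_lt_le. intros H'.
  apply (Psi_from_lex_lt M c) in H'; auto. eapply lex_lt_not_le; eauto.
Qed.

Lemma Psi_from_lex_lt_rev M c z z' : (1 <= M)%nat -> (c <= 1)%nat -> binary z -> binary z' ->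
  lex_lt (Psi_from M c z) (Psi_from M c z') -> lex_lt z z'.
Proof.
  intros HM Hc Hz Hz' H. destruct (lex_trichotomy z z') as [H1|[H1|H1]]; auto.
  - assert (z = z') by (apply functional_extensionality; auto). subst.
    exfalso; eapply lex_lt_irrefl; eauto.
  - apply (Psi_from_lex_lt M c) in H1; auto. exfalso. apply (lex_lt_irrefl (Psi_from M c z)).
    eapply lex_lt_trans; eauto.
Qed.

Lemma Psi_from_inj M c z z' : (1 <= M)%nat -> (c <= 1)%nat -> binary z -> binary z' ->
  (forall i, Psi_from M c z i = Psi_from M c z' i) -> forall i, z i = z' i.
Proof.
  intros HM Hc Hz Hz' H. apply lex_le_antisym; eapply Psi_from_lex_le_rev; eauto; right; auto.
Qed.

Definition V_at M x m := lex_le (bar_seq M x) (shift m x) /\ lex_le (shift m x) x.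

(* At each shift of Psi M y only one of the two inequalities defining V is informative;
   which one is dictated by the digit of y preceding the shift. *)
Definition binary_V_at (y : seqn) n :=
  (prev_digit 0 y n = 0%nat -> lex_le (shift n y) y) /\ (prev_digit 0 y n = 1%nat -> lex_le (bar1 y) (shift n y)).

Lemma V_at_Psi_evenM M y n : (1 <= M)%nat -> Nat.even M = true -> binary y -> y 0 = 1%nat ->
  (V_at M (Psi M y) n <-> binary_V_at y n).
Proof.
  intros HM E Hy Hy0. pose proof (even_div2 M E) as EM. unfold V_at, binary_V_at, Psi.
  assert (Hp := prev_digit_binary 0 y n (Nat.le_0_l 1) Hy).
  assert (Hs := shift_Psi_from_evenM M 0 y n E). assert (Hb := bar_Psi_from M 0 y HM (Nat.le_0_l 1) Hy).
  assert (Hsb : binary (shift n y)) by (apply shift_binary; auto).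
  assert (Hx0 : Psi_from M 0 y 0 = S (Nat.div2 M)) by (rewrite Psi_from_evenM by auto; simpl; lia).
  destruct (prev_digit 0 y n) as [|[|p]] eqn:Ep; [| |lia].
  - assert (A : lex_le (bar_seq M (Psi_from M 0 y)) (shift n (Psi_from M 0 y))).
    { left; apply lex_lt_head. rewrite Hb, Hs, !Psi_from_evenM by auto. simpl. try rewrite Ep.
      unfold bar1, bar_seq. rewrite Hy0. lia. }
    split.
    + intros [_ H]; split; [|intros; lia]. intros _.
      eapply Psi_from_lex_le_rev with (M := M) (c := 0%nat); auto.
      eapply lex_le_ext; [exact Hs| intros; reflexivity|]; exact H.
    + intros [H _]; split; auto. eapply lex_le_ext; [intros i; symmetry; apply Hs| intros; reflexivity|].
      apply Psi_from_lex_le; auto.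
  - assert (A : lex_le (shift n (Psi_from M 0 y)) (Psi_from M 0 y)).
    { left; apply lex_lt_head. rewrite Hs, Hx0, Psi_from_evenM by auto. simpl. unfold shift.
      rewrite Nat.add_0_r. pose proof (Hy n). lia. }
    split.
    + intros [H _]; split; [intros; lia|]. intros _.
      eapply Psi_from_lex_le_rev with (M := M) (c := 1%nat); auto.
      apply bar1_binary. eapply lex_le_ext; [exact Hb| intros i; apply Hs|exact H].
    + intros [_ H]; split; auto.
      eapply lex_le_ext; [intros i; symmetry; apply Hb| intros i; symmetry; apply Hs|].
      apply Psi_from_lex_le; auto. apply bar1_binary.
Qed.

Lemma V_at_even_Psi_oddM M y n : (1 <= M)%nat -> Nat.even M = false -> binary y -> y 0 = 1%nat ->
  (V_at M (Psi M y) (2*n) <-> binary_V_at y n).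
Proof.
  intros HM E Hy Hy0. pose proof (odd_div2 M E) as EM. unfold V_at, binary_V_at, Psi.
  assert (Hp := prev_digit_binary 0 y n (Nat.le_0_l 1) Hy).
  assert (Hs := shift_even_Psi_from_oddM M 0 y n E).
  assert (Hb := bar_Psi_from M 0 y HM (Nat.le_0_l 1) Hy).
  assert (Hsb : binary (shift n y)) by (apply shift_binary; auto).
  assert (Hx0 : Psi_from M 0 y 0 = S (Nat.div2 M)) by (apply (Psi_from_oddM_even M 0 y 0 E)).
  assert (Z : forall c z, Psi_from M c z 0 = (S (Nat.div2 M) - c)%nat)
    by (intros; apply (Psi_from_oddM_even M c z 0 E)).
  destruct (prev_digit 0 y n) as [|[|p]] eqn:Ep; [| |lia].
  - assert (A : lex_le (bar_seq M (Psi_from M 0 y)) (shift (2*n) (Psi_from M 0 y))).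
    { left; apply lex_lt_head. rewrite Hb, Hs, !Z. try rewrite Ep. lia. }
    split.
    + intros [_ H]; split; [|intros; lia]. intros _.
      eapply Psi_from_lex_le_rev with (M := M) (c := 0%nat); auto.
      eapply lex_le_ext; [exact Hs| intros; reflexivity|]; exact H.
    + intros [H _]; split; auto. eapply lex_le_ext; [intros i; symmetry; apply Hs| intros; reflexivity|].
      apply Psi_from_lex_le; auto.
  - assert (A : lex_le (shift (2*n) (Psi_from M 0 y)) (Psi_from M 0 y)).
    { left; apply lex_lt_head. rewrite Hs, !Z. lia. }
    split.
    + intros [H _]; split; [intros; lia|]. intros _.
      eapply Psi_from_lex_le_rev with (M := M) (c := 1%nat); auto.
      apply bar1_binary. eapply lex_le_ext; [exact Hb| intros i; apply Hs|exact H].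
    + intros [_ H]; split; auto.
      eapply lex_le_ext; [intros i; symmetry; apply Hb| intros i; symmetry; apply Hs|].
      apply Psi_from_lex_le; auto. apply bar1_binary.
Qed.

Lemma V_at_odd_Psi_oddM M y n : (1 <= M)%nat -> Nat.even M = false -> binary y -> y 0 = 1%nat ->
  V_at M (Psi M y) (2*n+1).
Proof.
  intros HM E Hy Hy0. pose proof (odd_div2 M E) as EM. unfold V_at, Psi.
  assert (Hs := shift_odd_Psi_from_oddM M 0 y n E).
  assert (Hb := bar_Psi_from M 0 y HM (Nat.le_0_l 1) Hy).
  change (1 - 0)%nat with 1%nat in Hb.
  assert (X0 : Psi_from M 0 y 0 = S (Nat.div2 M)) by apply (Psi_from_oddM_even M 0 y 0 E).
  assert (X1 : Psi_from M 0 y 1 = S (Nat.div2 M))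
    by (pose proof (Psi_from_oddM_odd M 0 y 0 E) as T; simpl in T; rewrite T, Hy0; lia).
  assert (B0 : Psi_from M 1 (bar1 y) 0 = Nat.div2 M)
    by (pose proof (Psi_from_oddM_even M 1 (bar1 y) 0 E) as T; simpl in T; rewrite T; lia).
  assert (B1 : Psi_from M 1 (bar1 y) 1 = Nat.div2 M)
    by (pose proof (Psi_from_oddM_odd M 1 (bar1 y) 0 E) as T; simpl in T; rewrite T; unfold bar1, bar_seq; rewrite Hy0; lia).
  assert (W0 : Psi_odd_tail M (shift n y) 0 = (Nat.div2 M + y n)%nat)
    by (pose proof (Psi_odd_tail_even M (shift n y) 0) as T; simpl in T; rewrite T; unfold shift; rewrite Nat.add_0_r; reflexivity).
  assert (W1 : Psi_odd_tail M (shift n y) 1 = (S (Nat.div2 M) - y n)%nat)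
    by (pose proof (Psi_odd_tail_odd M (shift n y) 0) as T; simpl in T; rewrite T; unfold shift; rewrite Nat.add_0_r; reflexivity).
  pose proof (Hy n) as Hn.
  split; left.
  - destruct (y n) as [|[|]] eqn:Eq; [| |lia].
    + apply lex_lt_second; rewrite Hb, Hs, ?B0, ?B1, ?W0, ?W1; lia.
    + apply lex_lt_head; rewrite Hb, Hs, B0, W0; lia.
  - destruct (y n) as [|[|]] eqn:Eq; [| |lia].
    + apply lex_lt_head; rewrite Hs, X0, W0; lia.
    + apply lex_lt_second; rewrite Hs, ?X0, ?X1, ?W0, ?W1; lia.
Qed.

Lemma Vseq_Psi_iff_binary_V_at M y : (1 <= M)%nat -> binary y -> y 0 = 1%nat ->
  (in_Vseq M (Psi M y) <-> forall n, binary_V_at y n).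
Proof.
  intros HM Hy Hy0.
  assert (Eq : in_Vseq M (Psi M y) <-> forall n, V_at M (Psi M y) n) by (unfold in_Vseq, V_at; tauto).
  rewrite Eq. clear Eq.
  destruct (Nat.even M) eqn:E.
  - split; intros H n;
      [apply (proj1 (V_at_Psi_evenM M y n HM E Hy Hy0))|apply (proj2 (V_at_Psi_evenM M y n HM E Hy Hy0))]; apply H.
  - split; intros H n.
    + apply (proj1 (V_at_even_Psi_oddM M y n HM E Hy Hy0)); apply H.
    + destruct (nat_even_odd n) as [j [->| ->]].
      * apply (proj2 (V_at_even_Psi_oddM M y j HM E Hy Hy0)); apply H.
      * apply V_at_odd_Psi_oddM; auto.
Qed.

Lemma shift1_lex_le y : binary y -> y 0 = 1%nat -> lex_le (shift 1 y) y.
Proof.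
  intros Hy Hy0. apply lex_not_lt_le. intros [d [H1 H2]].
  assert (forall i, (i <= d)%nat -> y i = 1%nat).
  { induction i; intros Hi; auto. assert (A := H1 i ltac:(lia)). unfold shift in A. simpl in A.
    rewrite <- A. apply IHi; lia. }
  unfold shift in H2. rewrite H in H2 by lia. pose proof (Hy (1+d)%nat). lia.
Qed.

Lemma Vseq1_iff_binary_V_at y : binary y -> y 0 = 1%nat -> (in_Vseq 1 y <-> forall n, binary_V_at y n).
Proof.
  intros Hy Hy0. split.
  - intros H n; split; intros _; apply H.
  - intros H.
    assert (U : forall n, lex_le (shift n y) y).
    { induction n as [n IH] using lt_wf_ind. destruct n as [|n]. right; intros; reflexivity.
      destruct (H (S n)) as [H1 H2]. simpl in H1, H2.
      assert (Hn : y n = 0%nat \/ y n = 1%nat) by (pose proof (Hy n); lia).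
      destruct Hn as [Hn|Hn]; [apply H1; auto|].
      assert (A := IH n (Nat.lt_succ_diag_r n)).
      apply (lex_le_common_prefix _ _ 1) in A;
        [|intros i Hi; replace i with 0%nat by lia; unfold shift; rewrite Nat.add_0_r; lia].
      eapply lex_le_trans; [|apply shift1_lex_le; auto].
      eapply lex_le_ext; [| |exact A]; intros i; unfold shift; f_equal; lia. }
    assert (L : forall n, lex_le (bar1 y) (shift n y)).
    { induction n as [n IH] using lt_wf_ind. destruct n as [|n].
      left; apply lex_lt_head. unfold bar1, bar_seq, shift; simpl. rewrite Hy0; lia.
      destruct (H (S n)) as [H1 H2]. simpl in H1, H2.
      assert (Hn : y n = 0%nat \/ y n = 1%nat) by (pose proof (Hy n); lia).
      destruct Hn as [Hn0|Hn]; [|apply H2; auto].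
      assert (A := IH n (Nat.lt_succ_diag_r n)).
      apply (lex_le_common_prefix _ _ 1) in A;
        [|intros i Hi; replace i with 0%nat by lia; unfold bar1, bar_seq, shift; rewrite Nat.add_0_r, Hy0, Hn0; lia].
      eapply lex_le_trans;
        [|eapply lex_le_ext; [| |exact A]; intros i; unfold shift; try f_equal; try lia; reflexivity].
      assert (B := bar_lex_le 1 _ _ (shift_binary y 1 Hy) Hy (U 1%nat)).
      eapply lex_le_ext; [| |exact B]; intros; reflexivity. }
    intros n; split; auto.
Qed.

Lemma Psi_Vseq_iff M y : (1 <= M)%nat -> binary y -> y 0 = 1%nat ->
  (in_Vseq M (Psi M y) <-> in_Vseq 1 y).
Proof.
  intros HM Hy Hy0. rewrite Vseq_Psi_iff_binary_V_at, Vseq1_iff_binary_V_at by auto. tauto.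
Qed.

(* For a fixed point y of Psi_1 the V-condition at shift 2n follows from the one at
   shift n, and it holds automatically at odd shifts. *)
Lemma Psi1_fixpoint_Vseq y : binary y -> y 0 = 1%nat -> (forall i, Psi 1 y i = y i) -> in_Vseq 1 y.
Proof.
  intros Hy Hy0 Hf.
  assert (E : Nat.even 1 = false) by reflexivity.
  assert (forall m, V_at 1 y m).
  { induction m as [m IH] using lt_wf_ind.
    assert (R : V_at 1 (Psi 1 y) m -> V_at 1 y m).
    { intros [H1 H2]; split; [eapply lex_le_ext; [| |exact H1] | eapply lex_le_ext; [| |exact H2]]; intros i; unfold bar_seq, shift; rewrite ?Hf; reflexivity. }
    apply R. destruct (nat_even_odd m) as [n [->| ->]].
    - apply V_at_even_Psi_oddM; auto. destruct n as [|n].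
      + split; [intros _; right; intros; reflexivity| simpl; intros; lia].
      + destruct (IH (S n)) as [H1 H2]; [lia|]. split; intros _; auto.
    - apply V_at_odd_Psi_oddM; auto. }
  intros n; apply H.
Qed.

(** * The image of Psi *)

Definition ones : seqn := fun _ => 1%nat.
Lemma ones_binary : binary ones. Proof. intros i; unfold ones; lia. Qed.

Lemma mod2_double j : ((2*j) mod 2 = 0)%nat.
Proof. rewrite Nat.mul_comm, Nat.Div0.mod_mul. reflexivity. Qed.
Lemma mod2_double_S j : ((2*j+1) mod 2 = 1)%nat.
Proof. rewrite Nat.add_comm, Nat.mul_comm, Nat.Div0.mod_add. reflexivity. Qed.

Lemma unit_seq_evenM M i : Nat.even M = true -> periodic (unit_lift M) i = Nat.div2 M.
Proof.
  intros H; unfold periodic, unit_lift; rewrite H. change (length [Nat.div2 M]) with 1%nat.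
  rewrite Nat.mod_1_r. reflexivity.
Qed.
Lemma unit_seq_oddM_even M j : Nat.even M = false -> periodic (unit_lift M) (2*j) = S (Nat.div2 M).
Proof.
  intros H; unfold periodic, unit_lift; rewrite H.
  change (length [S (Nat.div2 M); Nat.div2 M]) with 2%nat. rewrite mod2_double. reflexivity.
Qed.
Lemma unit_seq_oddM_odd M j : Nat.even M = false -> periodic (unit_lift M) (2*j+1) = Nat.div2 M.
Proof.
  intros H; unfold periodic, unit_lift; rewrite H.
  change (length [S (Nat.div2 M); Nat.div2 M]) with 2%nat. rewrite mod2_double_S. reflexivity.
Qed.

Lemma Vseq_digit_bounds M x i : in_Vseq M x -> (x i <= x 0)%nat /\ (M - x 0 <= x i)%nat.
Proof.
  intros HV. destruct (HV i) as [H1 H2]. apply lex_le_head in H1, H2.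
  unfold shift, bar_seq in *. rewrite Nat.add_0_r in *. lia.
Qed.

Lemma unit_seq_Omega M : (1 <= M)%nat -> in_Omega M (periodic (unit_lift M)).
Proof.
  intros HM i. destruct (Nat.even M) eqn:E.
  - rewrite unit_seq_evenM by auto. pose proof (even_div2 M E). lia.
  - pose proof (odd_div2 M E).
    destruct (nat_even_odd i) as [j [->| ->]];
      [rewrite unit_seq_oddM_even|rewrite unit_seq_oddM_odd]; auto; lia.
Qed.

Lemma unit_seq_Vseq M : (1 <= M)%nat -> in_Vseq M (periodic (unit_lift M)).
Proof.
  intros HM n. set (P := periodic (unit_lift M)). destruct (Nat.even M) eqn:E.
  - pose proof (even_div2 M E).
    split; right; intros i; unfold bar_seq, shift, P; rewrite !unit_seq_evenM by auto; lia.
  - pose proof (odd_div2 M E).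
    assert (Hb : lex_lt (bar_seq M P) P).
    { apply lex_lt_head. unfold bar_seq, P. pose proof (unit_seq_oddM_even M 0 E) as T. simpl in T.
      rewrite T. lia. }
    destruct (nat_even_odd n) as [m [->| ->]].
    + assert (S0 : forall i, shift (2*m) P i = P i).
      { intros i; unfold shift, P. destruct (nat_even_odd i) as [j [->| ->]].
        - replace (2*m+2*j)%nat with (2*(m+j))%nat by lia. rewrite !unit_seq_oddM_even; auto.
        - replace (2*m+(2*j+1))%nat with (2*(m+j)+1)%nat by lia. rewrite !unit_seq_oddM_odd; auto. }
      split; [left; eapply lex_lt_ext_r; [|exact Hb]|right]; intros; rewrite S0; reflexivity.
    + assert (S1 : forall i, shift (2*m+1) P i = bar_seq M P i).
      { intros i; unfold shift, P, bar_seq. destruct (nat_even_odd i) as [j [->| ->]].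
        - replace (2*m+1+2*j)%nat with (2*(m+j)+1)%nat by lia.
          rewrite unit_seq_oddM_odd, unit_seq_oddM_even; auto; lia.
        - replace (2*m+1+(2*j+1))%nat with (2*(m+j+1))%nat by lia.
          rewrite unit_seq_oddM_odd, unit_seq_oddM_even; auto; lia. }
      split; [right|left; eapply lex_lt_ext_l; [|exact Hb]]; intros; rewrite S1; reflexivity.
Qed.

Lemma unit_seq_lt_Psi M y : (1 <= M)%nat -> y 0 = 1%nat -> lex_lt (periodic (unit_lift M)) (Psi M y).
Proof.
  intros HM Hy0. destruct (Nat.even M) eqn:E.
  - apply lex_lt_head. rewrite unit_seq_evenM by auto. unfold Psi; rewrite Psi_from_evenM by auto.
    simpl. rewrite Hy0. lia.
  - apply lex_lt_second.
    + pose proof (unit_seq_oddM_even M 0 E) as T. pose proof (Psi_from_oddM_even M 0 y 0 E) as T'.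
      simpl in T, T'. unfold Psi. rewrite T, T'. lia.
    + pose proof (unit_seq_oddM_odd M 0 E) as T. pose proof (Psi_from_oddM_odd M 0 y 0 E) as T'.
      simpl in T, T'. unfold Psi. rewrite T, T', Hy0. lia.
Qed.

Definition flat_between (x : seqn) (c i j : nat) : Prop := forall l, (i < l <= j)%nat -> x l = c.

(* For even M = 2k the digits of x lie in {k-1, k, k+1}; y_j records whether the last
   digit different from k among x_0 .. x_j was k+1 (then 1) or k-1 (then 0). *)
Fixpoint decode_evenM (x : seqn) (k : nat) (j : nat) : nat :=
  match j with
  | 0 => 1%nat
  | S j' => if Nat.eqb (x (S j')) (S k) then 1%nat
            else if Nat.eqb (x (S j')) (k - 1) then 0%nat else decode_evenM x k j'
  end.

Section PsiOntoEven.

Variables (M : nat) (x : seqn).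
Hypotheses (HM : (1 <= M)%nat) (E : Nat.even M = true) (HO : in_Omega M x) (HV : in_Vseq M x).
Hypotheses (Hlt : lex_lt (periodic (unit_lift M)) x) (Hle : lex_le x (Psi M ones)).

Let k := Nat.div2 M.

Lemma Psi_ones_evenM_0 : Psi M ones 0 = S k.
Proof.
  pose proof (even_div2 M E).
  unfold Psi; rewrite Psi_from_evenM by auto; simpl; unfold ones; fold k; lia.
Qed.

Lemma Psi_ones_evenM_S i : Psi M ones (S i) = k.
Proof.
  pose proof (even_div2 M E).
  unfold Psi; rewrite Psi_from_evenM by auto; simpl; unfold ones; fold k; lia.
Qed.

Lemma evenM_head : x 0 = S k.
Proof.
  pose proof (even_div2 M E) as EM. fold k in EM. assert (A := lex_le_head _ _ Hle).
  rewrite Psi_ones_evenM_0 in A.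
  destruct (Nat.eq_dec (x 0) (S k)) as [|Hne]; auto. exfalso.
  apply (lex_lt_not_le _ _ Hlt). apply lex_le_pointwise. intros i. rewrite unit_seq_evenM by auto.
  destruct (Vseq_digit_bounds M x i HV). fold k. lia.
Qed.

Lemma evenM_digit_bounds i : (k - 1 <= x i <= S k)%nat.
Proof.
  pose proof (even_div2 M E) as EM. fold k in EM. pose proof evenM_head.
  destruct (Vseq_digit_bounds M x i HV). lia.
Qed.

(* Two maxima separated only by k's would make some shift exceed Psi(1^oo). *)
Lemma evenM_no_double_max i j : (i <= j)%nat -> x i = S k -> flat_between x k i j -> x (S j) <> S k.
Proof.
  intros Hij Hi Hl Heq.
  assert (L : lex_lt (Psi M ones) (shift i x)).
  { exists (S j - i)%nat; split.
    - intros [|l] Hl'; unfold shift.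
      + rewrite Psi_ones_evenM_0, Nat.add_0_r; auto.
      + rewrite Psi_ones_evenM_S, Hl; auto; lia.
    - replace (S j - i)%nat with (S (j - i)) by lia. rewrite Psi_ones_evenM_S. unfold shift.
      replace (i + S (j - i))%nat with (S j) by lia. lia. }
  apply (lex_lt_not_le _ _ L). eapply lex_le_trans; [apply (HV i)|exact Hle].
Qed.

Lemma evenM_no_double_min i j : (i <= j)%nat -> x i = (k - 1)%nat -> flat_between x k i j ->
  x (S j) <> (k - 1)%nat.
Proof.
  intros Hij Hi Hl Heq. pose proof (even_div2 M E) as EM. fold k in EM.
  assert (HO1 : in_Omega M (Psi M ones)) by (apply Psi_from_Omega; auto; apply ones_binary).
  assert (L : lex_lt (shift i x) (bar_seq M (Psi M ones))).
  { exists (S j - i)%nat; split.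
    - intros [|l] Hl'; unfold shift, bar_seq.
      + rewrite Psi_ones_evenM_0, Nat.add_0_r; auto; lia.
      + rewrite Psi_ones_evenM_S, Hl; auto; lia.
    - replace (S j - i)%nat with (S (j - i)) by lia. unfold bar_seq. rewrite Psi_ones_evenM_S.
      unfold shift. replace (i + S (j - i))%nat with (S j) by lia. lia. }
  apply (lex_lt_not_le _ _ L). eapply lex_le_trans; [apply (bar_lex_le M _ _ HO HO1 Hle)|apply (HV i)].
Qed.

Lemma decode_evenM_spec j :
  (decode_evenM x k j = 1%nat /\ exists i, (i <= j)%nat /\ x i = S k /\ flat_between x k i j) \/
  (decode_evenM x k j = 0%nat /\ exists i, (i <= j)%nat /\ x i = (k - 1)%nat /\ flat_between x k i j).
Proof.
  induction j as [|j IH].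
  - left; split; [reflexivity|]. exists 0%nat; split; [lia|split; [apply evenM_head|intros l; lia]].
  - simpl. destruct (Nat.eqb_spec (x (S j)) (S k)).
    + left; split; auto. exists (S j); split; [lia|split; auto]. intros l; lia.
    + destruct (Nat.eqb_spec (x (S j)) (k - 1)).
      * right; split; auto. exists (S j); split; [lia|split; auto]. intros l; lia.
      * assert (x (S j) = k) by (pose proof (evenM_digit_bounds (S j)); lia).
        destruct IH as [[H1 [i [H2 [H3 H4]]]]|[H1 [i [H2 [H3 H4]]]]]; [left|right];
          (split; [exact H1|]); exists i; (split; [lia|split; [exact H3|]]);
          intros l Hl; (destruct (Nat.eq_dec l (S j)) as [->|]; [assumption|apply H4; lia]).
Qed.

Lemma Psi_onto_evenM : exists y, binary y /\ y 0 = 1%nat /\ forall i, x i = Psi M y i.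
Proof.
  pose proof (even_div2 M E) as EM. fold k in EM.
  exists (decode_evenM x k); split; [|split; [reflexivity|]].
  - intros j; destruct (decode_evenM_spec j) as [[H _]|[H _]]; lia.
  - intros [|j]; unfold Psi; rewrite Psi_from_evenM by auto; fold k.
    + simpl. rewrite evenM_head. lia.
    + simpl prev_digit. simpl decode_evenM. destruct (Nat.eqb_spec (x (S j)) (S k)) as [Ha|Ha].
      * destruct (decode_evenM_spec j) as [[H1 [i [H2 [H3 H4]]]]|[H1 _]];
          [exfalso; eapply evenM_no_double_max; eauto|]. rewrite H1, Ha. lia.
      * destruct (Nat.eqb_spec (x (S j)) (k - 1)) as [Hb|Hb].
        -- destruct (decode_evenM_spec j) as [[H1 _]|[H1 [i [H2 [H3 H4]]]]];
             [|exfalso; eapply evenM_no_double_min; eauto]. rewrite H1, Hb. lia.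
        -- assert (x (S j) = k) by (pose proof (evenM_digit_bounds (S j)); lia).
           destruct (decode_evenM_spec j) as [[H1 _]|[H1 _]]; rewrite H1; lia.
Qed.

End PsiOntoEven.

Definition pairs_between (x : seqn) (a b i j : nat) : Prop :=
  forall l, (i < l <= j)%nat -> x (2 * l) = a /\ x (2 * l + 1) = b.

Section PsiOntoOdd.

Variables (M : nat) (x : seqn).
Hypotheses (HM : (1 <= M)%nat) (E : Nat.even M = false) (HO : in_Omega M x) (HV : in_Vseq M x).
Hypotheses (Hlt : lex_lt (periodic (unit_lift M)) x) (Hle : lex_le x (Psi M ones)).

Let k := Nat.div2 M.

Lemma Psi_ones_oddM_0 : Psi M ones 0 = S k.
Proof. exact (Psi_from_oddM_even M 0 ones 0 E). Qed.

Lemma Psi_ones_oddM_even j : Psi M ones (2 * S j) = k.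
Proof. unfold Psi. rewrite Psi_from_oddM_even by auto. simpl; unfold ones; fold k; lia. Qed.

Lemma Psi_ones_oddM_odd j : Psi M ones (2 * j + 1) = S k.
Proof. unfold Psi. rewrite Psi_from_oddM_odd by auto. unfold ones; fold k; lia. Qed.

Lemma oddM_head : x 0 = S k.
Proof.
  pose proof (odd_div2 M E) as EM. fold k in EM. assert (A := lex_le_head _ _ Hle).
  rewrite Psi_ones_oddM_0 in A.
  destruct (Nat.eq_dec (x 0) (S k)) as [|Hne]; auto. exfalso.
  apply (lex_lt_not_le _ _ Hlt). apply lex_le_pointwise. intros i.
  destruct (Vseq_digit_bounds M x i HV). destruct (nat_even_odd i) as [j [->| ->]];
    [rewrite unit_seq_oddM_even|rewrite unit_seq_oddM_odd]; auto; fold k; lia.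
Qed.

Lemma oddM_digit_bounds i : (k <= x i <= S k)%nat.
Proof.
  pose proof (odd_div2 M E) as EM. fold k in EM. pose proof oddM_head.
  destruct (Vseq_digit_bounds M x i HV). lia.
Qed.

(* If x_1 = k, the first position where x exceeds (k+1 k)^oo starts a block (k+1)(k+1),
   and the shift to that block would exceed x. *)
Lemma oddM_second : x 1 = S k.
Proof.
  pose proof oddM_head as Hx0. pose proof oddM_digit_bounds as Hdig.
  destruct (Nat.eq_dec (x 1) (S k)) as [|Hne]; auto. exfalso.
  destruct Hlt as [d [H1 H2]]. destruct (nat_even_odd d) as [j [->| ->]].
  - rewrite unit_seq_oddM_even in H2 by auto. pose proof (Hdig (2*j)%nat). fold k in H2. lia.
  - destruct j as [|j].
    { rewrite unit_seq_oddM_odd in H2 by auto. pose proof (Hdig 1%nat). simpl in H2. fold k in H2. lia. }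
    assert (Xe : x (2 * S j) = S k) by (rewrite <- H1 by lia; rewrite unit_seq_oddM_even; auto).
    assert (Xo : x (2 * S j + 1) = S k).
    { rewrite unit_seq_oddM_odd in H2; auto. pose proof (Hdig (2 * S j + 1)%nat). fold k in H2. lia. }
    apply (lex_lt_not_le x (shift (2 * S j) x)); [|apply (HV (2 * S j)%nat)].
    apply lex_lt_second; unfold shift.
    + rewrite Nat.add_0_r, Xe, Hx0; reflexivity.
    + rewrite Nat.add_1_r in Xo. rewrite Nat.add_1_r, Xo. pose proof (Hdig 1%nat). lia.
Qed.

Lemma oddM_no_double_max i j : (i <= j)%nat -> x (2*i) = S k -> x (2*i+1) = S k ->
  pairs_between x k (S k) i j -> x (2*j+2) <> S k.
Proof.
  intros Hij Hi Hi' Hl Heq.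
  assert (L : lex_lt (Psi M ones) (shift (2*i) x)).
  { exists (2 * S (j - i))%nat; split.
    - intros l Hl'; unfold shift. destruct (nat_even_odd l) as [m [->| ->]].
      + destruct m as [|m]; [rewrite Nat.mul_0_r, Psi_ones_oddM_0, Nat.add_0_r; auto|].
        rewrite Psi_ones_oddM_even. replace (2*i + 2 * S m)%nat with (2 * (i + S m))%nat by lia.
        symmetry; apply (proj1 (Hl (i + S m)%nat ltac:(lia))).
      + rewrite Psi_ones_oddM_odd. destruct m as [|m].
        * replace (2*i + (2*0+1))%nat with (2*i+1)%nat by lia; auto.
        * replace (2*i + (2 * S m + 1))%nat with (2 * (i + S m) + 1)%nat by lia.
          symmetry; apply (proj2 (Hl (i + S m)%nat ltac:(lia))).
    - rewrite Psi_ones_oddM_even. unfold shift.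
      replace (2*i + 2 * S (j-i))%nat with (2*j+2)%nat by lia. lia. }
  apply (lex_lt_not_le _ _ L). eapply lex_le_trans; [apply (HV (2*i)%nat)|exact Hle].
Qed.

Lemma oddM_no_double_min i j : (i <= j)%nat -> x (2*i) = k -> x (2*i+1) = k ->
  pairs_between x (S k) k i j -> x (2*j+2) <> k.
Proof.
  intros Hij Hi Hi' Hl Heq. pose proof (odd_div2 M E) as EM. fold k in EM.
  assert (HO1 : in_Omega M (Psi M ones)) by (apply Psi_from_Omega; auto; apply ones_binary).
  assert (L : lex_lt (shift (2*i) x) (bar_seq M (Psi M ones))).
  { exists (2 * S (j - i))%nat; split.
    - intros l Hl'; unfold shift, bar_seq. destruct (nat_even_odd l) as [m [->| ->]].
      + destruct m as [|m]; [rewrite Nat.mul_0_r, Psi_ones_oddM_0, Nat.add_0_r; lia|].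
        rewrite Psi_ones_oddM_even. replace (2*i + 2 * S m)%nat with (2 * (i + S m))%nat by lia.
        rewrite (proj1 (Hl (i + S m)%nat ltac:(lia))). lia.
      + rewrite Psi_ones_oddM_odd. destruct m as [|m].
        * replace (2*i + (2*0+1))%nat with (2*i+1)%nat by lia; lia.
        * replace (2*i + (2 * S m + 1))%nat with (2 * (i + S m) + 1)%nat by lia.
          rewrite (proj2 (Hl (i + S m)%nat ltac:(lia))). lia.
    - unfold bar_seq. rewrite Psi_ones_oddM_even. unfold shift.
      replace (2*i + 2 * S (j-i))%nat with (2*j+2)%nat by lia. lia. }
  apply (lex_lt_not_le _ _ L).
  eapply lex_le_trans; [apply (bar_lex_le M _ _ HO HO1 Hle)|apply (HV (2*i)%nat)].
Qed.

Lemma oddM_last_block j :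
  (x (2*j+1) = S k /\ exists i, (i <= j)%nat /\ x (2*i) = S k /\ x (2*i+1) = S k /\
     pairs_between x k (S k) i j) \/
  (x (2*j+1) = k /\ exists i, (i <= j)%nat /\ x (2*i) = k /\ x (2*i+1) = k /\
     pairs_between x (S k) k i j).
Proof.
  pose proof oddM_digit_bounds as Hdig.
  induction j as [|j IH].
  { left; split; [apply oddM_second|]. exists 0%nat.
    split; [lia|split; [apply oddM_head|split; [apply oddM_second|intros l; lia]]]. }
  replace (2 * S j + 1)%nat with (2*j+3)%nat by lia.
  assert (Ext : forall a b i, x (2*j+2) = a -> x (2*j+3) = b -> pairs_between x a b i j ->
            pairs_between x a b i (S j)).
  { intros a b i Xe Xo H l Hl. destruct (Nat.eq_dec l (S j)) as [->|]; [|apply H; lia].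
    replace (2 * S j)%nat with (2*j+2)%nat by lia. replace (2*j+2+1)%nat with (2*j+3)%nat by lia. auto. }
  assert (New : forall a, x (2*j+2) = a -> x (2*j+3) = a -> exists i, (i <= S j)%nat /\
            x (2*i) = a /\ x (2*i+1) = a /\ forall b c, pairs_between x b c i (S j)).
  { intros a Xe Xo. exists (S j). split; [lia|].
    replace (2 * S j)%nat with (2*j+2)%nat by lia. replace (2*j+2+1)%nat with (2*j+3)%nat by lia.
    split; [auto|split; [auto|intros b c l; lia]]. }
  destruct IH as [[H0 [i [H1 [H2 [H3 H4]]]]]|[H0 [i [H1 [H2 [H3 H4]]]]]].
  - assert (Xe : x (2*j+2) = k)
      by (pose proof (oddM_no_double_max i j H1 H2 H3 H4); pose proof (Hdig (2*j+2)%nat); lia).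
    destruct (Nat.eq_dec (x (2*j+3)) (S k)) as [Xo|Xo].
    + left; split; auto. exists i; split; [lia|split; [auto|split; [auto|apply Ext; auto]]].
    + assert (Xo' : x (2*j+3) = k) by (pose proof (Hdig (2*j+3)%nat); lia).
      right; split; auto. destruct (New k Xe Xo') as [i' [? [? [? ?]]]]. exists i'; auto.
  - assert (Xe : x (2*j+2) = S k)
      by (pose proof (oddM_no_double_min i j H1 H2 H3 H4); pose proof (Hdig (2*j+2)%nat); lia).
    destruct (Nat.eq_dec (x (2*j+3)) k) as [Xo|Xo].
    + right; split; auto. exists i; split; [lia|split; [auto|split; [auto|apply Ext; auto]]].
    + assert (Xo' : x (2*j+3) = S k) by (pose proof (Hdig (2*j+3)%nat); lia).
      left; split; auto. destruct (New (S k) Xe Xo') as [i' [? [? [? ?]]]]. exists i'; auto.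
Qed.

Lemma Psi_onto_oddM : exists y, binary y /\ y 0 = 1%nat /\ forall i, x i = Psi M y i.
Proof.
  pose proof oddM_digit_bounds as Hdig.
  exists (fun j => x (2*j+1) - k)%nat; split; [|split].
  - intros j; pose proof (Hdig (2*j+1)%nat); lia.
  - simpl. rewrite oddM_second; lia.
  - intros i; destruct (nat_even_odd i) as [j [->| ->]]; unfold Psi.
    + rewrite Psi_from_oddM_even by auto. fold k. destruct j as [|j]; cbn [prev_digit].
      { rewrite Nat.mul_0_r, oddM_head; lia. }
      replace (2 * S j)%nat with (2*j+2)%nat by lia.
      destruct (oddM_last_block j) as [[H0 [i [H1 [H2 [H3 H4]]]]]|[H0 [i [H1 [H2 [H3 H4]]]]]].
      * pose proof (oddM_no_double_max i j H1 H2 H3 H4); pose proof (Hdig (2*j+2)%nat); lia.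
      * pose proof (oddM_no_double_min i j H1 H2 H3 H4); pose proof (Hdig (2*j+2)%nat); lia.
    + rewrite Psi_from_oddM_odd by auto. fold k. pose proof (Hdig (2*j+1)%nat); lia.
Qed.

End PsiOntoOdd.

Lemma Psi_onto M x : (1 <= M)%nat -> in_Omega M x -> in_Vseq M x ->
  lex_lt (periodic (unit_lift M)) x -> lex_le x (Psi M ones) ->
  exists y, binary y /\ y 0 = 1%nat /\ forall i, x i = Psi M y i.
Proof.
  intros. destruct (Nat.even M) eqn:E; [apply (Psi_onto_evenM M)|apply (Psi_onto_oddM M)]; auto.
Qed.

(** * Thue-Morse sequences *)

Lemma popc_aux_fuel f1 : forall f2 n, (n <= f1)%nat -> (n <= f2)%nat -> popc_aux f1 n = popc_aux f2 n.
Proof.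
  induction f1 as [|f1 IH]; intros f2 n H1 H2.
  - replace n with 0%nat by lia. destruct f2; reflexivity.
  - destruct f2 as [|f2]. replace n with 0%nat by lia. reflexivity.
    destruct n as [|n]. reflexivity. cbn [popc_aux]. f_equal.
    assert (S n / 2 < S n)%nat by (apply Nat.div_lt; lia). apply IH; lia.
Qed.

Lemma popcount_double n : popcount (2*n) = popcount n.
Proof.
  unfold popcount. destruct n as [|n]. reflexivity.
  replace (2 * S n)%nat with (S (S (2*n)))%nat by lia.
  change (popc_aux (S (S (2*n))) (S (S (2*n)))) with
    (S (S (2*n)) mod 2 + popc_aux (S (2*n)) (S (S (2*n)) / 2))%nat.
  replace (S (S (2*n)) mod 2)%nat with 0%nat by (apply Nat.mod_unique with (S n); lia).
  replace (S (S (2*n)) / 2)%nat with (S n) by (apply Nat.div_unique with 0%nat; lia).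
  rewrite Nat.add_0_l. apply popc_aux_fuel; lia.
Qed.

Lemma popcount_odd n : popcount (2*n+1) = S (popcount n).
Proof.
  unfold popcount. replace (2*n+1)%nat with (S (2*n)) by lia. cbn [popc_aux].
  replace (S (2*n) mod 2)%nat with 1%nat by (apply Nat.mod_unique with n; lia).
  replace (S (2*n) / 2)%nat with n by (apply Nat.div_unique with 1%nat; lia).
  simpl. f_equal. apply popc_aux_fuel; lia.
Qed.

Lemma tau_double n : tau (2*n) = tau n.
Proof. unfold tau; rewrite popcount_double; reflexivity. Qed.
Lemma tau_odd n : tau (2*n+1) = (1 - tau n)%nat.
Proof.
  unfold tau; rewrite popcount_odd, Nat.odd_succ, <- Nat.negb_odd.
  destruct (Nat.odd (popcount n)); reflexivity.
Qed.
Lemma tau_bin n : (tau n <= 1)%nat.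
Proof. unfold tau; destruct (Nat.odd _); lia. Qed.
Lemma tau_0 : tau 0 = 0%nat.
Proof. reflexivity. Qed.

Lemma tau_pow_add m : forall i, (i < 2^m)%nat -> tau (2^m + i) = (1 - tau i)%nat.
Proof.
  induction m; intros i Hi.
  - simpl in Hi. replace i with 0%nat by lia. reflexivity.
  - rewrite Nat.pow_succ_r' in *. destruct (nat_even_odd i) as [j [->| ->]].
    + replace (2 * 2^m + 2*j)%nat with (2 * (2^m + j))%nat by lia. rewrite !tau_double. apply IHm; lia.
    + replace (2 * 2^m + (2*j+1))%nat with (2 * (2^m + j) + 1)%nat by lia. rewrite !tau_odd, IHm by lia.
      pose proof (tau_bin j); lia.
Qed.

Lemma tau_pow m : tau (2^m) = 1%nat.
Proof.
  pose proof (tau_pow_add m 0). rewrite Nat.add_0_r in H. rewrite H. reflexivity.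
  pose proof (Nat.pow_nonzero 2 m); lia.
Qed.

Lemma lambda1 j : lambda 1 j = tau j.
Proof. reflexivity. Qed.

Lemma kl_seq1_binary : binary (kl_seq 1).
Proof. intros i; unfold kl_seq; rewrite lambda1; apply tau_bin. Qed.
Lemma kl_seq1_head : kl_seq 1 0 = 1%nat.
Proof. reflexivity. Qed.

Lemma Psi_kl_seq M : (1 <= M)%nat -> forall j, Psi M (kl_seq 1) j = kl_seq M j.
Proof.
  intros HM j.
  assert (Hk : kl_seq 1 = fun j => tau (S j)) by (apply functional_extensionality; reflexivity).
  rewrite Hk. unfold kl_seq, lambda. destruct (Nat.even M) eqn:E.
  - unfold Psi; rewrite Psi_from_evenM by auto. destruct j; cbn [prev_digit].
    + reflexivity.
    + replace (S j - 1)%nat with j by lia. reflexivity.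
  - set (k := Nat.div2 M). destruct (nat_even_odd j) as [m [->| ->]]; unfold Psi.
    + rewrite Psi_from_oddM_even by auto. replace (S (2*m)) with (2*m+1)%nat by lia. rewrite tau_odd.
      destruct m as [|m]; cbn [prev_digit]. rewrite tau_0; lia. pose proof (tau_bin (S m)); lia.
    + rewrite Psi_from_oddM_odd by auto. replace (S (2*m+1)) with (2 * S m)%nat by lia.
      rewrite tau_double. reflexivity.
Qed.

Lemma kl_seq1_Vseq : in_Vseq 1 (kl_seq 1).
Proof.
  apply Psi1_fixpoint_Vseq. apply kl_seq1_binary. apply kl_seq1_head. apply Psi_kl_seq; lia.
Qed.

(* For N a power of 2, bar(lambda_1 .. lambda_N)^+ = lambda_(N+1) .. lambda_(2N), so every
   digit of qprime_seq is a lambda_i, at the index below. *)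
Definition tm_index (N j : nat) : nat := if (j <? N)%nat then S j else (N + S ((j - N) mod N))%nat.

Lemma blockN_pow M n : exists p, blockN M n = (2^p)%nat.
Proof. unfold blockN; destruct (Nat.even M); eauto. Qed.

Lemma lambda_reflect M p i : (1 <= M)%nat -> (S i < 2^p)%nat ->
  (M - lambda M (S i))%nat = lambda M (2^p + S i).
Proof.
  intros HM Hi. unfold lambda. rewrite tau_pow_add by lia.
  destruct (Nat.even M) eqn:E.
  - pose proof (even_div2 M E). replace (2^p + S i - 1)%nat with (2^p + i)%nat by lia.
    rewrite tau_pow_add by lia. replace (S i - 1)%nat with i by lia.
    pose proof (tau_bin i); pose proof (tau_bin (S i)); lia.
  - pose proof (odd_div2 M E). pose proof (tau_bin (S i)); lia.
Qed.

Lemma lambda_reflect_last M p : (1 <= M)%nat ->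
  S (M - lambda M (2^p)) = lambda M (2^p + 2^p).
Proof.
  intros HM. unfold lambda. replace (2^p + 2^p)%nat with (2^(S p))%nat by (simpl; lia).
  rewrite !tau_pow. destruct (Nat.even M) eqn:E.
  - pose proof (even_div2 M E). assert (0 < 2^p)%nat by (pose proof (Nat.pow_nonzero 2 p); lia).
    replace (2^(S p) - 1)%nat with (2^p + (2^p - 1))%nat by (simpl; lia). rewrite tau_pow_add by lia.
    pose proof (tau_bin (2^p - 1)); lia.
  - pose proof (odd_div2 M E). lia.
Qed.

Lemma qprime_tail_nth M p i : (1 <= M)%nat -> (i < 2^p)%nat ->
  nth i (plus_word (bar_word M (lam_word M (2^p)))) 0%nat = lambda M (2^p + S i) /\
  length (plus_word (bar_word M (lam_word M (2^p)))) = (2^p)%nat.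
Proof.
  intros HM Hi. assert (0 < 2^p)%nat by (pose proof (Nat.pow_nonzero 2 p); lia).
  destruct (2^p)%nat as [|N'] eqn:EN; [lia|].
  unfold plus_word, bar_word, lam_word. rewrite seq_S, !map_app. simpl map.
  rewrite removelast_last, last_last. split.
  - destruct (Nat.lt_ge_cases i N') as [Hl|Hl].
    + rewrite app_nth1 by (rewrite !length_map, length_seq; lia).
      rewrite nth_indep with (d' := ((fun c => M - c) ((fun j => lambda M (S j)) 0%nat))%nat)
        by (rewrite !length_map, length_seq; lia).
      rewrite map_nth. change (lambda M 1) with ((fun j => lambda M (S j)) 0%nat).
      rewrite map_nth, seq_nth by lia. simpl (0 + i)%nat. rewrite <- EN. apply lambda_reflect; lia.
    + rewrite app_nth2 by (rewrite !length_map, length_seq; lia).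
      rewrite !length_map, length_seq. replace (i - N')%nat with 0%nat by lia. simpl nth.
      replace i with N' by lia. rewrite <- EN. replace (S N') with (2^p)%nat by lia.
      apply lambda_reflect_last; auto.
  - rewrite length_app, !length_map, length_seq. simpl; lia.
Qed.

Lemma qprime_seq_lambda M n j : (1 <= M)%nat -> qprime_seq M n j = lambda M (tm_index (blockN M n) j).
Proof.
  intros HM. destruct (blockN_pow M n) as [p Hp]. unfold qprime_seq, tm_index. simpl. rewrite Hp.
  destruct (j <? 2^p)%nat; auto.
  assert (0 < 2^p)%nat by (pose proof (Nat.pow_nonzero 2 p); lia).
  unfold periodic. destruct (qprime_tail_nth M p ((j - 2^p) mod 2^p) HM) as [A B].
  apply Nat.mod_upper_bound; lia. rewrite B, A. reflexivity.
Qed.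

Lemma mod_add1 a N : (0 < N)%nat -> ((a mod N + 1 < N)%nat -> (a + 1) mod N = (a mod N + 1)%nat) /\
                                 ((a mod N + 1 = N)%nat -> (a + 1) mod N = 0%nat).
Proof.
  intros HN. pose proof (Nat.div_mod_eq a N). split; intros H'.
  - symmetry; apply Nat.mod_unique with (a / N)%nat; lia.
  - symmetry; apply Nat.mod_unique with (a / N + 1)%nat; lia.
Qed.
Lemma mod_double a b :
  (0 < b)%nat -> ((2*a) mod (2*b) = 2 * (a mod b))%nat /\ ((2*a+1) mod (2*b) = 2 * (a mod b) + 1)%nat.
Proof.
  intros Hb. pose proof (Nat.div_mod_eq a b). pose proof (Nat.mod_upper_bound a b ltac:(lia)). split.
  - symmetry; apply Nat.mod_unique with (a / b)%nat; lia.
  - symmetry; apply Nat.mod_unique with (a / b)%nat; lia.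
Qed.

Lemma qprime_seq1_tau n j : qprime_seq 1 n j = tau (tm_index (2^n) j).
Proof. rewrite qprime_seq_lambda by lia. reflexivity. Qed.

Lemma tau_tm_index_pred p j : tau (tm_index (2^p) j) = tau (tm_index (2^p) (S j) - 1).
Proof.
  assert (HN : (0 < 2^p)%nat) by (pose proof (Nat.pow_nonzero 2 p); lia). set (N := (2^p)%nat) in *.
  unfold tm_index. destruct (Nat.ltb_spec j N); destruct (Nat.ltb_spec (S j) N).
  - f_equal; lia.
  - replace (S j - N)%nat with 0%nat by lia. rewrite Nat.Div0.mod_0_l. f_equal; lia.
  - lia.
  - replace (S j - N)%nat with ((j - N) + 1)%nat by lia.
    destruct (mod_add1 (j - N) N HN) as [A B]. pose proof (Nat.mod_upper_bound (j - N) N ltac:(lia)).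
    destruct (Nat.eq_dec ((j - N) mod N + 1) N) as [E|E].
    + rewrite B by auto.
      replace (N + S ((j - N) mod N))%nat with (2^(S p))%nat by (simpl; unfold N in *; lia).
      rewrite tau_pow. replace (N + 1 - 1)%nat with N by lia. unfold N; rewrite tau_pow. reflexivity.
    + rewrite A by lia. f_equal. lia.
Qed.

Lemma Psi_qprime_seq M n : (1 <= M)%nat -> forall j, Psi M (qprime_seq 1 n) j = qprime_seq M (S n) j.
Proof.
  intros HM j. rewrite qprime_seq_lambda by auto.
  assert (HN : (0 < 2^n)%nat) by (pose proof (Nat.pow_nonzero 2 n); lia).
  destruct (Nat.even M) eqn:E.
  - unfold blockN. rewrite E. replace (S n - 1)%nat with n by lia.
    unfold Psi; rewrite Psi_from_evenM by auto. rewrite qprime_seq1_tau. unfold lambda; rewrite E.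
    destruct j as [|j].
    + cbn [prev_digit]. unfold tm_index. destruct (Nat.ltb_spec 0 (2^n)); [|lia]. reflexivity.
    + cbn [prev_digit]. rewrite qprime_seq1_tau. rewrite (tau_tm_index_pred n j). reflexivity.
  - set (k := Nat.div2 M). unfold blockN. rewrite E. unfold lambda; rewrite E. unfold Psi.
    assert (D : (2 ^ S n = 2 * 2^n)%nat) by (simpl; lia). rewrite D.
    destruct (nat_even_odd j) as [m [->| ->]].
    + rewrite Psi_from_oddM_even by auto. unfold tm_index at 1.
      destruct (Nat.ltb_spec (2*m) (2 * 2^n)).
      * replace (S (2*m)) with (2*m+1)%nat by lia. rewrite tau_odd.
        destruct m as [|m]; cbn [prev_digit]. rewrite tau_0; lia.
        rewrite qprime_seq1_tau. unfold tm_index. destruct (Nat.ltb_spec m (2^n)); [|lia].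
        pose proof (tau_bin (S m)); lia.
      * replace (2*m - 2*2^n)%nat with (2 * (m - 2^n))%nat by lia.
        rewrite (proj1 (mod_double _ _ HN)).
        replace (2 * 2^n + S (2 * ((m - 2^n) mod 2^n)))%nat with (2 * (2^n + (m - 2^n) mod 2^n) + 1)%nat by lia.
        rewrite tau_odd. destruct m as [|m]. lia. cbn [prev_digit]. rewrite qprime_seq1_tau.
        rewrite (tau_tm_index_pred n m). unfold tm_index at 1.
        destruct (Nat.ltb_spec (S m) (2^n)); [lia|].
        replace (2^n + S ((S m - 2^n) mod 2^n) - 1)%nat with (2^n + (S m - 2^n) mod 2^n)%nat by lia.
        pose proof (tau_bin (2^n + (S m - 2^n) mod 2^n)); lia.
    + rewrite Psi_from_oddM_odd by auto. rewrite qprime_seq1_tau. unfold tm_index.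
      destruct (Nat.ltb_spec (2*m+1) (2 * 2^n)); destruct (Nat.ltb_spec m (2^n)); try lia.
      * replace (S (2*m+1)) with (2 * S m)%nat by lia. rewrite tau_double. reflexivity.
      * replace (2*m+1 - 2*2^n)%nat with (2 * (m - 2^n) + 1)%nat by lia.
        rewrite (proj2 (mod_double _ _ HN)).
        replace (2 * 2^n + S (2 * ((m - 2^n) mod 2^n) + 1))%nat with (2 * (2^n + S ((m - 2^n) mod 2^n)))%nat by lia.
        rewrite tau_double. reflexivity.
Qed.

Lemma qprime_seq1_binary n : binary (qprime_seq 1 n).
Proof. intros j; rewrite qprime_seq1_tau; apply tau_bin. Qed.
Lemma qprime_seq1_head n : qprime_seq 1 n 0 = 1%nat.
Proof.
  rewrite qprime_seq1_tau. unfold tm_index. destruct (Nat.ltb_spec 0 (2^n)). reflexivity.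
  pose proof (Nat.pow_nonzero 2 n); lia.
Qed.
Lemma qprime_seq1_0 : forall j, qprime_seq 1 0 j = ones j.
Proof.
  intros j; rewrite qprime_seq1_tau. unfold tm_index, ones. simpl (2^0)%nat.
  destruct (Nat.ltb_spec j 1). replace j with 0%nat by lia. reflexivity.
  rewrite Nat.mod_1_r. reflexivity.
Qed.

Lemma ones_Vseq : in_Vseq 1 ones.
Proof.
  intros n; split. left; apply lex_lt_head; unfold bar_seq, ones, shift; lia. right; reflexivity.
Qed.

Lemma qprime_seq1_Vseq n : in_Vseq 1 (qprime_seq 1 n).
Proof.
  induction n.
  - assert (qprime_seq 1 0 = ones) by (apply functional_extensionality; apply qprime_seq1_0).
    rewrite H; apply ones_Vseq.
  - assert (qprime_seq 1 (S n) = Psi 1 (qprime_seq 1 n))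
      by (apply functional_extensionality; intros; symmetry; apply Psi_qprime_seq; lia).
    rewrite H. apply Psi_Vseq_iff; auto. apply qprime_seq1_binary. apply qprime_seq1_head.
Qed.

(** * Paths in the graph G *)

Definition edge_of_digits (a b : nat) : edge :=
  if Nat.eqb a 1 then (if Nat.eqb b 1 then e4 else e1) else (if Nat.eqb b 1 then e3 else e2).
Definition path_of (y : seqn) (n : nat) : edge := match n with 0 => e0 | S n' => edge_of_digits (y n') (y n) end.

Lemma binary_cases y i : binary y -> y i = 0%nat \/ y i = 1%nat.
Proof. intros H; pose proof (H i); lia. Qed.

Lemma Psi_label_u M y : (1 <= M)%nat -> binary y -> y 0 = 1%nat ->
  forall n j, (j < length (unit_lift M))%nat ->
  Psi M y (length (unit_lift M) * n + j) = nth j (label_u M (path_of y n)) 0%nat.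
Proof.
  intros HM Hy Hy0 n j Hj. unfold label_u, unit_lift in *. unfold Psi.
  destruct (Nat.even M) eqn:E.
  - pose proof (even_div2 M E). simpl length in *. replace j with 0%nat by lia.
    rewrite Psi_from_evenM by auto.
    replace (1 * n + 0)%nat with n by lia.
    destruct n as [|n]; cbn [prev_digit path_of]. simpl. rewrite Hy0. lia.
    unfold edge_of_digits.
    destruct (binary_cases y n Hy) as [A|A]; destruct (binary_cases y (S n) Hy) as [B|B];
      rewrite A, B; simpl; lia.
  - pose proof (odd_div2 M E). simpl length in *.
    destruct j as [|[|j]]; [| |lia].
    + replace (2 * n + 0)%nat with (2 * n)%nat by lia. rewrite Psi_from_oddM_even by auto.
      destruct n as [|n]; cbn [prev_digit path_of]. simpl. lia.
      unfold edge_of_digits.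
      destruct (binary_cases y n Hy) as [A|A]; destruct (binary_cases y (S n) Hy) as [B|B];
        rewrite A; rewrite ?B; simpl; lia.
    + rewrite Psi_from_oddM_odd by auto.
      destruct n as [|n]; cbn [path_of]. simpl. rewrite Hy0. lia.
      unfold edge_of_digits.
      destruct (binary_cases y n Hy) as [A|A]; destruct (binary_cases y (S n) Hy) as [B|B];
        rewrite A, B; simpl; lia.
Qed.

Lemma path_of_is_path y : binary y -> y 0 = 1%nat -> is_path (path_of y).
Proof.
  intros Hy Hy0. split; [reflexivity|]. intros n. destruct n as [|n]; cbn [path_of].
  - unfold edge_of_digits. rewrite Hy0. simpl. destruct (Nat.eqb (y 1%nat) 1); reflexivity.
  - unfold edge_of_digits.
    destruct (binary_cases y n Hy) as [A|A]; destruct (binary_cases y (S n) Hy) as [B|B];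
      rewrite ?A, ?B; simpl; destruct (Nat.eqb (y (S (S n))) 1); reflexivity.
Qed.

Lemma path_of_label_star y : binary y -> y 0 = 1%nat -> forall n, y n = label_star (path_of y n).
Proof.
  intros Hy Hy0 [|n]; cbn [path_of]. rewrite Hy0; reflexivity.
  unfold edge_of_digits.
  destruct (binary_cases y n Hy) as [A|A]; destruct (binary_cases y (S n) Hy) as [B|B];
    rewrite ?A, ?B; reflexivity.
Qed.

Lemma unit_lift_length M : (length (unit_lift M) = 1 \/ length (unit_lift M) = 2)%nat.
Proof. unfold unit_lift; destruct (Nat.even M); simpl; auto. Qed.

Lemma block_decomposition M i :
  exists n j, (j < length (unit_lift M))%nat /\ i = (length (unit_lift M) * n + j)%nat.
Proof.
  destruct (unit_lift_length M) as [E|E]; rewrite E.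
  - exists i, 0%nat; lia.
  - destruct (nat_even_odd i) as [n [->| ->]]; [exists n, 0%nat|exists n, 1%nat]; lia.
Qed.

Lemma Phi_rel_Psi M y : (1 <= M)%nat -> binary y -> y 0 = 1%nat -> Phi_rel M (Psi M y) y.
Proof.
  intros HM Hy Hy0. exists (path_of y); split; [apply path_of_is_path; auto|split].
  - intros n j Hj. apply Psi_label_u; auto.
  - apply path_of_label_star; auto.
Qed.

Lemma Phi_rel_inv M x y :
  (1 <= M)%nat -> Phi_rel M x y -> binary y /\ y 0 = 1%nat /\ forall i, x i = Psi M y i.
Proof.
  intros HM [p [[P0 Pn] [PL PS]]].
  assert (Hy : binary y) by (intros i; rewrite PS; destruct (p i); simpl; lia).
  assert (Hy0 : y 0 = 1%nat) by (rewrite PS, P0; reflexivity).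
  assert (Hp : forall n, p n = path_of y n).
  { intros [|n]; [exact P0|]. cbn [path_of]. rewrite !PS. specialize (Pn n).
    destruct (p n) eqn:E1; destruct (p (S n)) eqn:E2; simpl in Pn; try discriminate; reflexivity. }
  split; [|split]; auto.
  intros i. destruct (block_decomposition M i) as [n [j [Hj ->]]]. rewrite PL by auto.
  rewrite Psi_label_u by auto. rewrite Hp. reflexivity.
Qed.

Open Scope R_scope.

(** * Quasi-greedy expansions *)

Definition term (a : seqn) (q : R) (i : nat) : R := INR (a i) / q ^ (S i).
Fixpoint psum (a : seqn) (q : R) (n : nat) : R :=
  match n with O => 0 | S n' => psum a q n' + term a q n' end.

Lemma term_nonneg a q i : 0 < q -> 0 <= term a q i.
Proof. intros Hq. unfold term. apply Rdiv_le_0_compat. apply pos_INR. apply pow_lt; lra. Qed.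

Lemma sum_f_psum a q n : sum_f_R0 (term a q) n = psum a q (S n).
Proof. induction n; simpl in *. lra. rewrite IHn. reflexivity. Qed.

Lemma psum_nonneg a q n : 0 < q -> 0 <= psum a q n.
Proof. intros Hq; induction n; simpl. lra. pose proof (term_nonneg a q n Hq); lra. Qed.

Lemma psum_mono a q n m : 0 < q -> (n <= m)%nat -> psum a q n <= psum a q m.
Proof.
  intros Hq Hnm. induction Hnm. lra. simpl. pose proof (term_nonneg a q m Hq). lra.
Qed.

Lemma psum_ext a b q n : (forall i, (i < n)%nat -> a i = b i) -> psum a q n = psum b q n.
Proof.
  induction n; intros H; simpl. reflexivity. rewrite IHn by (intros; apply H; lia).
  unfold term. rewrite H by lia. reflexivity.
Qed.

Lemma psum_ge_term a q n m : 0 < q -> (n <= m)%nat -> psum a q (S m) >= psum a q n + term a q m.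
Proof. intros Hq H. simpl. pose proof (psum_mono a q n m Hq H). lra. Qed.

Lemma sum_f_R0_mono f n m : (forall i, 0 <= f i) -> (n <= m)%nat -> sum_f_R0 f n <= sum_f_R0 f m.
Proof. intros Hf H. induction H as [|m' Hm' IH]. lra. simpl. pose proof (Hf (S m')). lra. Qed.

Lemma partial_sum_le_lim f l : (forall i, 0 <= f i) -> infinite_sum f l -> forall n, sum_f_R0 f n <= l.
Proof.
  intros Hf Hs n. apply Rnot_lt_le. intros Hlt.
  destruct (Hs (sum_f_R0 f n - l)) as [N HN]. lra.
  set (m := Nat.max N n). specialize (HN m ltac:(unfold m; lia)).
  assert (sum_f_R0 f n <= sum_f_R0 f m) by (apply sum_f_R0_mono; auto; unfold m; lia).
  unfold R_dist in HN. apply Rabs_lt_between in HN. lra.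
Qed.

Lemma lim_le_eventual_bound f l N B :
  infinite_sum f l -> (forall n, (N <= n)%nat -> sum_f_R0 f n <= B) -> l <= B.
Proof.
  intros Hs HB. apply Rnot_lt_le. intros Hlt.
  destruct (Hs (l - B)) as [K HK]. lra.
  specialize (HK (Nat.max N K) ltac:(lia)). specialize (HB (Nat.max N K) ltac:(lia)).
  unfold R_dist in HK. apply Rabs_lt_between in HK. lra.
Qed.

Lemma candidate_psum_le1 M q b : 1 < q -> qg_candidate M q b -> forall n, psum b q n <= 1.
Proof.
  intros Hq [_ [_ He]] [|n]. simpl; lra.
  rewrite <- sum_f_psum. apply partial_sum_le_lim; auto. intros; apply term_nonneg; lra.
Qed.

Lemma greedy_lex_max M q a b : 1 < q ->
  (forall n, (a n < M)%nat -> psum a q n + INR (a n + 1) / q ^ (S n) >= 1) ->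
  in_Omega M b -> not_end_zero b -> (forall n, psum b q n <= 1) -> lex_le b a.
Proof.
  intros Hq Hg Hb Hnz Hps. apply lex_not_lt_le. intros [d [H1 H2]].
  assert (Hd : (a d < M)%nat) by (pose proof (Hb d); lia).
  specialize (Hg d Hd).
  assert (E : psum b q d = psum a q d) by (apply psum_ext; intros; symmetry; auto).
  assert (Hqd : 0 < q ^ S d) by (apply pow_lt; lra).
  assert (A : psum b q (S d) >= 1).
  { simpl. rewrite E. unfold term. assert (INR (a d + 1) <= INR (b d)) by (apply le_INR; lia).
    assert (INR (a d + 1) / q ^ S d <= INR (b d) / q ^ S d)
      by (apply Rmult_le_compat_r; [left; apply Rinv_0_lt_compat; auto|auto]).
    lra. }
  destruct (Hnz (S d)) as [m [Hm1 Hm2]].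
  assert (B := psum_ge_term b q (S d) m ltac:(lra) Hm1).
  assert (0 < term b q m).
  { unfold term. apply Rdiv_lt_0_compat. apply lt_0_INR; lia. apply pow_lt; lra. }
  specialize (Hps (S m)). lra.
Qed.

Lemma quasi_greedy_unique M q a b : is_quasi_greedy M q a -> is_quasi_greedy M q b -> a = b.
Proof.
  intros [Ha Ha'] [Hb Hb']. apply functional_extensionality. apply lex_le_antisym; auto.
Qed.

(* [min M (ceil x - 1)]: the digit is chosen with a strict inequality, which keeps
   every remainder positive and makes the expansion quasi-greedy rather than greedy. *)
Fixpoint digit_floor (M : nat) (x : R) : nat :=
  match M with O => O | S M' => (digit_floor M' x + (if Rlt_dec (INR (S M')) x then 1 else 0))%nat end.

Lemma digit_floor_spec M x :
  0 < x -> (digit_floor M x <= M)%nat /\ INR (digit_floor M x) < x /\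
  ((digit_floor M x < M)%nat -> x <= INR (digit_floor M x) + 1).
Proof.
  intros Hx. induction M as [|M IH].
  - simpl. split; [lia|split; [lra|intros; lia]].
  - destruct IH as [I1 [I2 I3]]. cbn [digit_floor]. destruct (Rlt_dec (INR (S M)) x) as [Hl|Hl].
    + assert (digit_floor M x = M).
      { destruct (Nat.eq_dec (digit_floor M x) M); auto. specialize (I3 ltac:(lia)).
        assert (INR (digit_floor M x) + 1 <= INR M) by (rewrite <- S_INR; apply le_INR; lia).
        rewrite S_INR in Hl. lra. }
      rewrite H. replace (M + 1)%nat with (S M) by lia. split; [lia|split; [auto|intros; lia]].
    + rewrite Nat.add_0_r. split; [lia|split; auto]. intros Hc.
      destruct (Nat.eq_dec (digit_floor M x) M) as [E|E]. rewrite E. rewrite <- S_INR. lra.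
      apply I3; lia.
Qed.

Fixpoint greedy_rem (M : nat) (q : R) (n : nat) : R :=
  match n with O => 1 | S n' => q * greedy_rem M q n' - INR (digit_floor M (q * greedy_rem M q n')) end.
Definition greedy_digits (M : nat) (q : R) : seqn := fun n => digit_floor M (q * greedy_rem M q n).

Lemma greedy_rem_bounds M q : 1 < q <= INR M + 1 -> forall n, 0 < greedy_rem M q n <= 1.
Proof.
  intros Hq. induction n; simpl. lra.
  destruct IHn as [H1 H2]. assert (Hx : 0 < q * greedy_rem M q n) by (apply Rmult_lt_0_compat; lra).
  destruct (digit_floor_spec M _ Hx) as [C1 [C2 C3]]. split. lra.
  destruct (Nat.eq_dec (digit_floor M (q * greedy_rem M q n)) M) as [E|E].
  - rewrite E. assert (q * greedy_rem M q n <= q * 1) by (apply Rmult_le_compat_l; lra). lra.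
  - specialize (C3 ltac:(lia)). lra.
Qed.

Lemma digit_floor_le M x : (digit_floor M x <= M)%nat.
Proof. induction M. simpl; lia. cbn [digit_floor]. destruct (Rlt_dec (INR (S M)) x); lia. Qed.

Lemma greedy_digits_Omega M q : in_Omega M (greedy_digits M q).
Proof. intros n. apply digit_floor_le. Qed.

Lemma greedy_rem_identity M q :
  0 < q -> forall n, psum (greedy_digits M q) q n + greedy_rem M q n / q ^ n = 1.
Proof.
  intros Hq. induction n.
  - simpl. field.
  - simpl psum. simpl greedy_rem. unfold term. simpl pow.
    assert (0 < q ^ n) by (apply pow_lt; lra).
    change (INR (digit_floor M (q * greedy_rem M q n))) with (INR (greedy_digits M q n)).
    set (c := INR (greedy_digits M q n)) in *. set (r := greedy_rem M q n) in *.
    set (P := psum (greedy_digits M q) q n) in *.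
    replace (P + c / (q * q ^ n) + (q * r - c) / (q * q ^ n)) with (P + r / q ^ n) by (field; lra).
    exact IHn.
Qed.

Lemma inv_lt1 q : 1 < q -> / q < 1.
Proof. intros; rewrite <- Rinv_1; apply Rinv_lt_contravar; lra. Qed.

Lemma greedy_digits_sum M q : 1 < q <= INR M + 1 -> infinite_sum (term (greedy_digits M q) q) 1.
Proof.
  intros Hq eps Heps.
  destruct (pow_lt_1_zero (/ q) ltac:(rewrite Rabs_pos_eq; [apply inv_lt1; lra|left; apply Rinv_0_lt_compat; lra]) eps Heps) as [N HN].
  exists N. intros n Hn. unfold R_dist. rewrite sum_f_psum.
  pose proof (greedy_rem_identity M q ltac:(lra) (S n)). pose proof (greedy_rem_bounds M q Hq (S n)).
  specialize (HN (S n) ltac:(lia)). rewrite pow_inv in HN.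
  assert (0 < q ^ S n) by (apply pow_lt; lra).
  rewrite Rabs_pos_eq in HN by (left; apply Rinv_0_lt_compat; auto).
  replace (psum (greedy_digits M q) q (S n) - 1) with (- (greedy_rem M q (S n) / q ^ S n)) by lra.
  rewrite Rabs_Ropp, Rabs_pos_eq by (apply Rdiv_le_0_compat; lra).
  assert (greedy_rem M q (S n) / q ^ S n <= / q ^ S n).
  { unfold Rdiv. rewrite <- (Rmult_1_l (/ q ^ S n)) at 2.
    apply Rmult_le_compat_r; [left; apply Rinv_0_lt_compat|]; lra. }
  lra.
Qed.

Lemma greedy_digits_greedy M q : 1 < q <= INR M + 1 ->
  forall n, (greedy_digits M q n < M)%nat -> psum (greedy_digits M q) q n + INR (greedy_digits M q n + 1) / q ^ (S n) >= 1.
Proof.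
  intros Hq n Hn. pose proof (greedy_rem_identity M q ltac:(lra) n).
  pose proof (greedy_rem_bounds M q Hq n).
  assert (Hx : 0 < q * greedy_rem M q n) by (apply Rmult_lt_0_compat; lra).
  destruct (digit_floor_spec M _ Hx) as [_ [_ C3]]. specialize (C3 Hn). unfold greedy_digits in *.
  rewrite plus_INR. simpl INR at 2. assert (0 < q ^ n) by (apply pow_lt; lra).
  assert (E : greedy_rem M q n / q ^ n = q * greedy_rem M q n / q ^ S n) by (simpl; field; lra).
  assert (q * greedy_rem M q n / q ^ S n <= (INR (digit_floor M (q * greedy_rem M q n)) + 1) / q ^ S n).
  { apply Rmult_le_compat_r; auto. left; apply Rinv_0_lt_compat; apply pow_lt; lra. }
  lra.
Qed.

Lemma pow_mul_unbounded q d B : 1 < q -> 0 < d -> exists j, B < q ^ j * d.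
Proof.
  intros Hq Hd. destruct (INR_unbounded (B / ((q - 1) * d))) as [j Hj]. exists j.
  pose proof (Rle_pow_lin (q - 1) j ltac:(lra)) as Bern. replace (1 + (q - 1)) with q in Bern by lra.
  assert (Hqd : 0 < (q - 1) * d) by nra.
  assert (Hjd : B < INR j * ((q - 1) * d)).
  { apply Rmult_lt_compat_r with (r := (q - 1) * d) in Hj; [|exact Hqd].
    unfold Rdiv in Hj. rewrite Rmult_assoc, Rinv_l in Hj by lra. lra. }
  assert ((1 + INR j * (q - 1)) * d <= q ^ j * d) by (apply Rmult_le_compat_r; lra).
  nra.
Qed.

Lemma greedy_digits_not_end_zero M q : 1 < q <= INR M + 1 -> not_end_zero (greedy_digits M q).
Proof.
  intros Hq n. apply NNPP. intros H.
  assert (Z : forall i, (n <= i)%nat -> greedy_digits M q i = 0%nat).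
  { intros i Hi. apply NNPP; intros H'. apply H; exists i; auto. }
  assert (G : forall j, greedy_rem M q (n + j) = q ^ j * greedy_rem M q n).
  { induction j as [|j IH]; [simpl; rewrite Nat.add_0_r; lra|].
    rewrite Nat.add_succ_r. simpl greedy_rem.
    change (digit_floor M (q * greedy_rem M q (n + j))) with (greedy_digits M q (n + j)%nat).
    rewrite Z, IH by lia. simpl. lra. }
  pose proof (greedy_rem_bounds M q Hq n) as [B1 _].
  destruct (pow_mul_unbounded q (greedy_rem M q n) 1 ltac:(lra) B1) as [j Hj].
  pose proof (greedy_rem_bounds M q Hq (n + j)) as [_ B3]. rewrite G in B3. lra.
Qed.

Lemma greedy_digits_quasi_greedy M q : 1 < q <= INR M + 1 -> is_quasi_greedy M q (greedy_digits M q).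
Proof.
  intros Hq. split.
  - split; [apply greedy_digits_Omega|split; [apply greedy_digits_not_end_zero; auto|apply greedy_digits_sum; auto]].
  - intros b Hb. apply (greedy_lex_max M q); try lra.
    + apply greedy_digits_greedy; auto.
    + apply Hb.
    + apply Hb.
    + apply (candidate_psum_le1 M); auto; lra.
Qed.

Lemma alpha_greedy_digits M q : 1 < q <= INR M + 1 -> alpha M q = greedy_digits M q.
Proof.
  intros Hq. unfold alpha. apply (quasi_greedy_unique M q).
  - apply epsilon_spec. exists (greedy_digits M q). apply greedy_digits_quasi_greedy; auto.
  - apply greedy_digits_quasi_greedy; auto.
Qed.

Lemma alpha_quasi_greedy M q : 1 < q <= INR M + 1 -> is_quasi_greedy M q (alpha M q).
Proof. intros; rewrite alpha_greedy_digits; auto; apply greedy_digits_quasi_greedy; auto. Qed.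

Lemma alpha_greedy M q : 1 < q <= INR M + 1 ->
  forall n, (alpha M q n < M)%nat -> psum (alpha M q) q n + INR (alpha M q n + 1) / q ^ (S n) >= 1.
Proof. intros; rewrite alpha_greedy_digits in *; auto; apply greedy_digits_greedy; auto. Qed.

Lemma quasi_greedy_alpha M q a : 1 < q <= INR M + 1 -> is_quasi_greedy M q a -> alpha M q = a.
Proof. intros Hq H. apply (quasi_greedy_unique M q); auto. apply alpha_quasi_greedy; auto. Qed.

Lemma pow_lt_compat x y n : 0 < x < y -> x ^ S n < y ^ S n.
Proof.
  intros H. induction n. simpl; lra.
  change (x * x ^ S n < y * y ^ S n). assert (0 < x ^ S n) by (apply pow_lt; lra). nra.
Qed.

Lemma alpha_increasing M q1 q2 :
  1 < q1 -> q1 < q2 -> q2 <= INR M + 1 -> lex_lt (alpha M q1) (alpha M q2).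
Proof.
  intros H1 H12 H2. set (a := alpha M q1).
  assert (Qa := alpha_quasi_greedy M q1 ltac:(lra)). fold a in Qa.
  destruct Qa as [[Ha [Hna Hea]] _].
  assert (Tle : forall i, term a q2 i <= term a q1 i).
  { intros i; unfold term. apply Rmult_le_compat_l. apply pos_INR.
    apply Rinv_le_contravar. apply pow_lt; lra. apply pow_incr; lra. }
  assert (Ple : forall n, psum a q2 n <= psum a q1 n)
    by (induction n; simpl; [lra|pose proof (Tle n); lra]).
  assert (P1 : forall n, psum a q1 n <= 1) by (apply (candidate_psum_le1 M); [lra|split; auto]).
  assert (L : lex_le a (alpha M q2)).
  { apply (greedy_lex_max M q2); auto; try lra. apply alpha_greedy; lra.
    intros n; specialize (Ple n); specialize (P1 n); lra. }
  destruct L as [L|L]; auto. exfalso.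
  assert (E : alpha M q2 = a) by (apply functional_extensionality; intros; symmetry; auto).
  assert (Qb := alpha_quasi_greedy M q2 ltac:(lra)). rewrite E in Qb. destruct Qb as [[_ [_ Heb]] _].
  destruct (Hna 0%nat) as [m [_ Hm]].
  set (d := term a q1 m - term a q2 m).
  assert (Hd : 0 < d).
  { unfold d, term. unfold Rdiv. rewrite <- Rmult_minus_distr_l. apply Rmult_lt_0_compat.
    apply lt_0_INR; lia.
    assert (0 < q1 ^ S m) by (apply pow_lt; lra). pose proof (pow_lt_compat q1 q2 m ltac:(lra)).
    apply Rlt_0_minus. apply Rinv_lt_contravar; auto. nra. }
  assert (Pd : forall n, (m < n)%nat -> psum a q2 n <= psum a q1 n - d).
  { induction n; intros Hn. lia. simpl. destruct (Nat.eq_dec n m) as [->|Hne].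
    - pose proof (Ple m). unfold d. lra.
    - pose proof (Tle n). specialize (IHn ltac:(lia)). lra. }
  assert (1 <= 1 - d).
  { apply (lim_le_eventual_bound (term a q2) _ m _ Heb). intros n Hn. rewrite sum_f_psum.
    specialize (Pd (S n) ltac:(lia)). specialize (P1 (S n)). lra. }
  lra.
Qed.

(** * Parry's criterion *)

Definition value (a : seqn) (q : R) : R := Series (term a q).

Lemma ex_series_term M a q : in_Omega M a -> 1 < q -> ex_series (term a q).
Proof.
  intros Ha Hq.
  apply (ex_series_le (K := R_AbsRing) (V := R_CompleteNormedModule) (term a q) (fun n => INR M * (/ q) ^ n)).
  - intros n. change (norm (term a q n)) with (Rabs (term a q n)).
    rewrite Rabs_pos_eq by (apply term_nonneg; lra). unfold term.
    rewrite pow_inv. unfold Rdiv. apply Rmult_le_compat.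
    + apply pos_INR.
    + left; apply Rinv_0_lt_compat, pow_lt; lra.
    + apply le_INR, Ha.
    + apply Rinv_le_contravar. apply pow_lt; lra. apply Rle_pow; [lra|lia].
  - apply (ex_series_scal_l (K := R_AbsRing) (V := R_NormedModule) (INR M) (fun n => (/ q) ^ n)).
    apply ex_series_geom. rewrite Rabs_pos_eq by (left; apply Rinv_0_lt_compat; lra). apply inv_lt1; lra.
Qed.

Lemma value_sum M a q : in_Omega M a -> 1 < q -> infinite_sum (term a q) (value a q).
Proof. intros. apply is_series_Reals. apply Series_correct. eapply ex_series_term; eauto. Qed.

Lemma psum_bound M a q :
  in_Omega M a -> 1 < q -> forall n, psum a q n <= INR M / (q - 1) * (1 - / q ^ n).
Proof.
  intros Ha Hq n. induction n; simpl psum. simpl.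
  replace (1 - / 1) with 0 by (rewrite Rinv_1; ring). lra.
  assert (0 < q ^ n) by (apply pow_lt; lra).
  assert (term a q n <= INR M / q ^ S n).
  { unfold term. unfold Rdiv. apply Rmult_le_compat_r. left; apply Rinv_0_lt_compat, pow_lt; lra.
    apply le_INR, Ha. }
  replace (INR M / (q - 1) * (1 - / q ^ S n)) with (INR M / (q - 1) * (1 - / q ^ n) + INR M / q ^ S n).
  lra. simpl. field. lra.
Qed.

Lemma value_bounds M a q : in_Omega M a -> 1 < q -> 0 <= value a q <= INR M / (q - 1).
Proof.
  intros Ha Hq. pose proof (value_sum M a q Ha Hq) as HS. split.
  - pose proof (partial_sum_le_lim _ _ (fun i => term_nonneg a q i ltac:(lra)) HS 0%nat). simpl in H.
    pose proof (term_nonneg a q 0 ltac:(lra)). lra.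
  - apply (lim_le_eventual_bound _ _ 0 _ HS). intros n _. rewrite sum_f_psum.
    pose proof (psum_bound M a q Ha Hq (S n)). assert (0 < q ^ S n) by (apply pow_lt; lra).
    assert (0 < / q ^ S n) by (apply Rinv_0_lt_compat; auto).
    assert (0 <= INR M / (q - 1)) by (apply Rdiv_le_0_compat; [apply pos_INR|lra]).
    nra.
Qed.

Lemma value_shift1 M a q :
  in_Omega M a -> 1 < q -> value a q = (INR (a 0%nat) + value (shift 1 a) q) / q.
Proof.
  intros Ha Hq. unfold value. rewrite Series_incr_1 by (eapply ex_series_term; eauto).
  rewrite (Series_ext _ (fun k => / q * term (shift 1 a) q k)).
  - rewrite Series_scal_l. unfold term. simpl. field. lra.
  - intros k. unfold term, shift. simpl. field. split; [|lra]. apply pow_nonzero; lra.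
Qed.

Lemma shift1_shift a n : shift 1 (shift n a) = shift (S n) a.
Proof. apply functional_extensionality; intros i; unfold shift; f_equal; lia. Qed.

Lemma value_shift_succ M a q n : in_Omega M a -> 1 < q ->
  value (shift n a) q = (INR (a n) + value (shift (S n) a) q) / q.
Proof.
  intros Ha Hq. rewrite (value_shift1 M (shift n a) q) by (auto; apply shift_Omega; auto).
  rewrite shift1_shift. unfold shift. rewrite Nat.add_0_r. reflexivity.
Qed.

Lemma value_shift_prefix M a q : in_Omega M a -> 1 < q -> forall K m,
  value (shift m a) q = psum (shift m a) q K + value (shift (m + K) a) q / q ^ K.
Proof.
  intros Ha Hq K. induction K; intros m.
  - simpl. rewrite Nat.add_0_r. field.
  - rewrite IHK. rewrite (value_shift_succ M a q (m + K)) by auto. simpl psum. unfold term, shift.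
    replace (S (m + K)) with (m + S K)%nat by lia.
    assert (0 < q ^ K) by (apply pow_lt; lra). simpl. field. lra.
Qed.

Lemma shift_0 a : shift 0 a = a.
Proof. apply functional_extensionality; intros; reflexivity. Qed.

Definition tail_value (a : seqn) (q : R) (m : nat) : R := value (shift m a) q.

Lemma tail_value_succ M a q n :
  in_Omega M a -> 1 < q -> tail_value a q n = (INR (a n) + tail_value a q (n + 1)) / q.
Proof. intros; unfold tail_value. rewrite Nat.add_1_r. apply (value_shift_succ M); auto. Qed.

Lemma tail_value_prefix M a q K m :
  in_Omega M a -> 1 < q -> (forall i, (i < K)%nat -> shift m a i = a i) ->
  tail_value a q m = psum a q K + tail_value a q (m + K) / q ^ K.
Proof.
  intros Ha Hq E. unfold tail_value. rewrite (value_shift_prefix M a q Ha Hq K m).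
  rewrite (psum_ext _ a q K E). reflexivity.
Qed.

Section ParryCriterion.

Variables (M : nat) (a : seqn) (q : R).
Hypothesis (Ha : in_Omega M a) (Hq : 1 < q) (Hvalue : value a q = 1).
Hypothesis Hshift : forall n, lex_le (shift n a) a.

Lemma tail_value_bounds m : 0 <= tail_value a q m <= INR M / (q - 1).
Proof. apply value_bounds; auto. apply shift_Omega; auto. Qed.

(* If the tail at m exceeds 1, compare it with a at the first index K where the shift
   drops below a: the excess reappears at m + K + 1, multiplied by at least q. *)
Lemma tail_value_excess_grows m : tail_value a q m > 1 ->
  exists m', tail_value a q m' - 1 >= q * (tail_value a q m - 1).
Proof.
  intros Hm. destruct (Hshift m) as [[K [HK1 HK2]]|E].
  - exists (m + K + 1)%nat.
    pose proof (tail_value_prefix M a q K m Ha Hq HK1) as P1.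
    pose proof (tail_value_prefix M a q K 0 Ha Hq (fun i _ => eq_refl)) as P0.
    unfold tail_value at 1 in P0. rewrite shift_0, Hvalue in P0. simpl (0 + K)%nat in P0.
    pose proof (tail_value_succ M a q (m + K) Ha Hq) as R1.
    pose proof (tail_value_succ M a q K Ha Hq) as R0.
    assert (A : INR (a (m + K)%nat) + 1 <= INR (a K))
      by (rewrite <- S_INR; apply le_INR; unfold shift in HK2; lia).
    pose proof (tail_value_bounds (K + 1)). pose proof (tail_value_bounds (m + K)).
    assert (QK : 1 <= q ^ K) by (apply pow_R1_Rle; lra).
    set (T1 := tail_value a q (m + K)) in *. set (T0 := tail_value a q K) in *.
    set (U1 := tail_value a q (m + K + 1)) in *. set (Q := q ^ K) in *. set (t := tail_value a q m) in *.
    assert (D : t - 1 = (T1 - T0) / Q) by (unfold Rdiv in *; rewrite Rmult_minus_distr_r; lra).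
    assert (D2 : T1 - T0 <= (U1 - 1) / q).
    { rewrite R1, R0. unfold Rdiv. rewrite <- Rmult_minus_distr_r.
      apply Rmult_le_compat_r; [left; apply Rinv_0_lt_compat|]; lra. }
    assert (D3 : (t - 1) * Q <= (U1 - 1) / q) by (rewrite D; field_simplify; lra).
    assert (D4 : (t - 1) * q <= (t - 1) * Q * q).
    { assert (0 <= (t - 1) * q) by (apply Rmult_le_pos; lra).
      replace ((t - 1) * Q * q) with (((t - 1) * q) * Q) by ring. nra. }
    assert (D5 : (t - 1) * Q * q <= U1 - 1).
    { apply Rmult_le_compat_r with (r := q) in D3; [|lra].
      replace ((U1 - 1) / q * q) with (U1 - 1) in D3 by (field; lra). exact D3. }
    lra.
  - exfalso. assert (Es : shift m a = a) by (apply functional_extensionality; auto).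
    unfold tail_value in Hm. rewrite Es, Hvalue in Hm. lra.
Qed.

Lemma tail_value_excess_iter m : tail_value a q m > 1 ->
  forall j, exists m', tail_value a q m' - 1 >= q ^ j * (tail_value a q m - 1).
Proof.
  intros Hm j. induction j as [|j [m' Hm']]; [exists m; simpl; lra|].
  assert (0 < q ^ j) by (apply pow_lt; lra).
  destruct (tail_value_excess_grows m' ltac:(nra)) as [m'' Hm''].
  exists m''. simpl. nra.
Qed.

Lemma tail_value_le1 m : tail_value a q m <= 1.
Proof.
  apply Rnot_lt_le. intros Hm.
  destruct (pow_mul_unbounded q (tail_value a q m - 1) (INR M / (q - 1)) Hq ltac:(lra)) as [j Hj].
  destruct (tail_value_excess_iter m Hm j) as [m' Hm']. pose proof (tail_value_bounds m'). lra.
Qed.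

End ParryCriterion.

Lemma parry_quasi_greedy M a q : in_Omega M a -> not_end_zero a -> 1 < q -> value a q = 1 ->
  (forall n, lex_le (shift n a) a) -> is_quasi_greedy M q a.
Proof.
  intros Ha Hnz Hq H1 Hp. pose proof (value_sum M a q Ha Hq) as HS. rewrite H1 in HS.
  assert (Hcand : qg_candidate M q a) by (split; [auto|split; auto]).
  split; auto. intros b Hb. apply (greedy_lex_max M q); auto; try apply Hb.
  - intros n Hn. pose proof (tail_value_prefix M a q (S n) 0 Ha Hq (fun i _ => eq_refl)) as P.
    simpl (0 + S n)%nat in P.
    unfold tail_value at 1 in P. rewrite shift_0, H1 in P.
    pose proof (tail_value_le1 M a q Ha Hq H1 Hp (S n)).
    assert (0 < q ^ S n) by (apply pow_lt; lra). simpl psum in P. rewrite plus_INR. simpl INR at 2.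
    unfold term in P. simpl pow in *.
    assert (tail_value a q (S n) / (q * q ^ n) <= 1 / (q * q ^ n))
      by (unfold Rdiv; apply Rmult_le_compat_r; [left; apply Rinv_0_lt_compat; lra|lra]).
    unfold Rdiv in *. rewrite Rmult_plus_distr_r. lra.
  - apply (candidate_psum_le1 M); auto.
Qed.

Definition coeffs (a : seqn) (n : nat) : R := match n with O => 0 | S i => INR (a i) end.

Lemma PSeries_coeffs_value M a x : in_Omega M a -> 0 < x < 1 -> PSeries (coeffs a) x = value a (/ x).
Proof.
  intros Ha Hx. unfold PSeries, value.
  assert (E : forall k, coeffs a (S k) * x ^ S k = term a (/ x) k).
  { intros k. unfold term, coeffs, Rdiv. rewrite pow_inv, Rinv_inv. reflexivity. }
  assert (Ex : ex_series (fun k => coeffs a k * x ^ k)).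
  { apply ex_series_incr_1. apply (ex_series_ext (term a (/ x))). intros; symmetry; apply E.
    apply (ex_series_term M); auto. rewrite <- Rinv_1. apply Rinv_lt_contravar; lra. }
  rewrite Series_incr_1 by auto. simpl coeffs. rewrite Rmult_0_l, Rplus_0_l. apply Series_ext. exact E.
Qed.

Lemma pow_le1 x n : 0 <= x <= 1 -> x ^ n <= 1.
Proof. intros H. rewrite <- (pow1 n). apply pow_incr. lra. Qed.

Lemma pow_le1_decr x n m : 0 <= x <= 1 -> (n <= m)%nat -> x ^ m <= x ^ n.
Proof.
  intros H Hnm. replace m with (n + (m - n))%nat by lia. rewrite pow_add.
  pose proof (pow_le1 x (m - n) H). assert (0 <= x ^ n) by (apply pow_le; lra). nra.
Qed.

Lemma bernoulli_lower h N : 0 <= h <= 1 -> 1 - INR N * h <= (1 - h) ^ N.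
Proof.
  intros Hh. induction N. simpl; lra.
  rewrite S_INR. simpl pow. assert (0 <= (1 - h) ^ N) by (apply pow_le; lra).
  destruct (Rle_dec (1 - (INR N + 1) * h) 0). nra.
  assert (0 <= 1 - INR N * h) by lra.
  assert (0 <= (1 - h) * ((1 - h) ^ N - (1 - INR N * h))) by (apply Rmult_le_pos; lra).
  assert (0 <= INR N * h * h) by (apply Rmult_le_pos; [apply Rmult_le_pos; [apply pos_INR|lra]|lra]).
  nra.
Qed.

Lemma PSeries_coeffs_continuous M a x :
  in_Omega M a -> 0 < x < 1 -> continuity_pt (PSeries (coeffs a)) x.
Proof.
  intros Ha Hx. apply PSeries_continuity.
  set (r := (1 + x) / 2).
  assert (Hr : Rbar_le r (CV_radius (coeffs a))).
  { apply (proj1 (CV_radius_bounded (coeffs a))). exists (INR M). intros n.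
    rewrite Rabs_mult. assert (Rabs (coeffs a n) <= INR M).
    { destruct n; simpl. rewrite Rabs_R0. apply pos_INR. rewrite Rabs_pos_eq by apply pos_INR.
      apply le_INR, Ha. }
    assert (Rabs (r ^ n) <= 1).
    { rewrite <- RPow_abs. rewrite Rabs_pos_eq by (unfold r; lra). apply pow_le1. unfold r; lra. }
    assert (0 <= Rabs (r ^ n)) by apply Rabs_pos. assert (0 <= Rabs (coeffs a n)) by apply Rabs_pos.
    nra. }
  apply Rbar_lt_le_trans with (y := Finite r); auto. simpl. rewrite Rabs_pos_eq by lra. unfold r; lra.
Qed.

Lemma value_le1_at_top M a : (1 <= M)%nat -> in_Omega M a -> value a (INR M + 1) <= 1.
Proof.
  intros HM Ha. assert (HM1 : 1 <= INR M) by (apply (le_INR 1); exact HM).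
  destruct (value_bounds M a (INR M + 1) Ha ltac:(lra)) as [_ B].
  replace (INR M + 1 - 1) with (INR M) in B by ring. unfold Rdiv in B. rewrite Rinv_r in B; lra.
Qed.

(* Two nonzero digits among the first N, each contributing at least
   x ^ N >= 1 - N (1 - x) = 3/4 (Bernoulli), for x = 1 - 1/(4N). *)
Lemma value_ge1_near_1 M a : in_Omega M a -> not_end_zero a ->
  exists x, 3/4 <= x < 1 /\ 1 <= value a (/ x).
Proof.
  intros Ha Hnz.
  destruct (Hnz 0%nat) as [i1 [_ Hi1]]. destruct (Hnz (S i1)) as [i2 [Hi2 Hi2']].
  set (N := S i2). set (h := / (4 * INR N)). set (x := 1 - h).
  assert (HN : 1 <= INR N) by (unfold N; rewrite S_INR; pose proof (pos_INR i2); lra).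
  assert (Hh : 0 < h <= 1/4).
  { unfold h. split; [apply Rinv_0_lt_compat; lra|].
    unfold Rdiv. rewrite Rmult_1_l. apply Rinv_le_contravar; lra. }
  exists x. split; [unfold x; lra|]. set (q := / x).
  assert (Hq : 1 < q) by (unfold q; rewrite <- Rinv_1; apply Rinv_lt_contravar; unfold x; lra).
  assert (T : forall i, a i <> 0%nat -> (i < N)%nat -> term a q i >= 3/4).
  { intros i Hai HiN. unfold term, Rdiv, q. rewrite pow_inv, Rinv_inv.
    assert (1 <= INR (a i)) by (apply (le_INR 1); lia).
    assert (x ^ N <= x ^ S i) by (apply pow_le1_decr; unfold x; lra || lia).
    assert (1 - INR N * h <= x ^ N) by (apply bernoulli_lower; lra).
    assert (INR N * h = 1/4) by (unfold h; field; lra).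
    assert (0 <= x ^ S i) by (apply pow_le; unfold x; lra). nra. }
  assert (P := partial_sum_le_lim _ _ (fun i => term_nonneg a q i ltac:(lra)) (value_sum M a q Ha Hq) i2).
  assert (P' : value a q >= psum a q (S i2)) by (rewrite <- sum_f_psum; lra).
  pose proof (psum_ge_term a q (S i1) i2 ltac:(lra) Hi2).
  pose proof (psum_nonneg a q i1 ltac:(lra)).
  pose proof (T i1 Hi1 ltac:(unfold N; lia)). pose proof (T i2 Hi2' ltac:(unfold N; lia)).
  simpl psum in *. lra.
Qed.

Lemma value_one_exists M a : (1 <= M)%nat -> in_Omega M a -> not_end_zero a ->
  exists q, 1 < q <= INR M + 1 /\ value a q = 1.
Proof.
  intros HM Ha Hnz.
  assert (HM1 : 2 <= INR M + 1) by (apply le_INR in HM; simpl in HM; lra).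
  set (lo := / (INR M + 1)).
  assert (Hlo : 0 < lo <= 1/2).
  { unfold lo. split; [apply Rinv_0_lt_compat; lra|].
    unfold Rdiv. rewrite Rmult_1_l. apply Rinv_le_contravar; lra. }
  destruct (value_ge1_near_1 M a Ha Hnz) as [x0 [Hx0 Fx0]].
  rewrite <- (PSeries_coeffs_value M) in Fx0 by (auto; lra).
  assert (Flo : PSeries (coeffs a) lo <= 1).
  { rewrite (PSeries_coeffs_value M) by (auto; lra). unfold lo; rewrite Rinv_inv.
    apply value_le1_at_top; auto. }
  destruct (Ranalysis5.f_interv_is_interv (PSeries (coeffs a)) lo x0 1 ltac:(lra) ltac:(lra))
    as [x [Hx Fx]].
  { intros x Hx. apply (PSeries_coeffs_continuous M); auto; lra. }
  exists (/ x). split.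
  - split; [rewrite <- Rinv_1; apply Rinv_lt_contravar; lra|].
    replace (INR M + 1) with (/ lo) by (unfold lo; rewrite Rinv_inv; auto).
    apply Rinv_le_contravar; lra.
  - rewrite <- (PSeries_coeffs_value M) by (auto; lra). exact Fx.
Qed.

Lemma Vseq_alpha_exists M a : (1 <= M)%nat -> in_Omega M a -> in_Vseq M a ->
  exists q, 1 < q <= INR M + 1 /\ alpha M q = a.
Proof.
  intros HM Ha HV. assert (Hnz := Vseq_not_end_zero M a HM Ha HV).
  destruct (value_one_exists M a HM Ha Hnz) as [q [Hq Hv]].
  exists q; split; auto. apply quasi_greedy_alpha; auto. apply parry_quasi_greedy; auto. lra.
  intros n; apply HV.
Qed.


(** * Transfer to bases *)

Lemma alpha_Omega M q : 1 < q <= INR M + 1 -> in_Omega M (alpha M q).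
Proof. intros H. apply (alpha_quasi_greedy M q H). Qed.

Lemma alpha_lt_iff M q1 q2 : 1 < q1 <= INR M + 1 -> 1 < q2 <= INR M + 1 ->
  (q1 < q2 <-> lex_lt (alpha M q1) (alpha M q2)).
Proof.
  intros H1 H2. split; intros H.
  - apply alpha_increasing; lra.
  - destruct (Rtotal_order q1 q2) as [|[E|E]]; auto.
    + subst. exfalso; eapply lex_lt_irrefl; eauto.
    + exfalso. assert (lex_lt (alpha M q2) (alpha M q1)) by (apply alpha_increasing; lra).
      apply (lex_lt_irrefl (alpha M q1)). eapply lex_lt_trans; eauto.
Qed.

Lemma alpha_le_iff M q1 q2 : 1 < q1 <= INR M + 1 -> 1 < q2 <= INR M + 1 ->
  (q1 <= q2 <-> lex_le (alpha M q1) (alpha M q2)).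
Proof.
  intros H1 H2. split; intros H.
  - destruct H as [H|H]. left; apply alpha_increasing; lra. subst; apply lex_le_refl.
  - apply Rnot_lt_le. intros H'. apply (alpha_lt_iff M q2 q1 H2 H1) in H'. eapply lex_lt_not_le; eauto.
Qed.

Lemma alpha_inj M q1 q2 :
  1 < q1 <= INR M + 1 -> 1 < q2 <= INR M + 1 -> alpha M q1 = alpha M q2 -> q1 = q2.
Proof.
  intros H1 H2 E.
  apply Rle_antisym; [apply (alpha_le_iff M q1 q2 H1 H2)|apply (alpha_le_iff M q2 q1 H2 H1)];
    rewrite E; apply lex_le_refl.
Qed.

Lemma base_of_spec M a : (1 <= M)%nat -> in_Omega M a -> in_Vseq M a ->
  1 < base_of M a <= INR M + 1 /\ alpha M (base_of M a) = a.
Proof.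
  intros HM Ha HV. unfold base_of.
  assert (Ex : exists q, 1 < q <= INR M + 1 /\ forall i, alpha M q i = a i).
  { destruct (Vseq_alpha_exists M a HM Ha HV) as [q [Hq E]]. exists q; split; auto. rewrite E; auto. }
  destruct (epsilon_spec (inhabits 0) _ Ex) as [H1 H2]. split; auto.
  apply functional_extensionality; auto.
Qed.

Lemma base_of_alpha M q : (1 <= M)%nat -> in_V M q -> base_of M (alpha M q) = q.
Proof.
  intros HM [Hq HV]. destruct (base_of_spec M _ HM (alpha_Omega M q Hq) HV) as [Hb Eb].
  exact (alpha_inj M _ _ Hb Hq Eb).
Qed.

Definition in_Vseq_star (y : seqn) : Prop := binary y /\ y 0%nat = 1%nat /\ in_Vseq 1 y.

Lemma base_of1_spec y : in_Vseq_star y -> in_V 1 (base_of 1 y) /\ alpha 1 (base_of 1 y) = y.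
Proof.
  intros [Hy [_ HV]]. destruct (base_of_spec 1 y (le_n 1) Hy HV) as [Hb Eb].
  split; [split; [exact Hb|rewrite Eb; exact HV]|exact Eb].
Qed.

Lemma alpha1_Vseq_star p : in_V 1 p -> in_Vseq_star (alpha 1 p).
Proof.
  intros [Hp HV]. assert (Hb : binary (alpha 1 p)) by exact (alpha_Omega 1 p Hp).
  split; [exact Hb|split; [|exact HV]].
  destruct (HV 0%nat) as [A _]. apply lex_le_head in A.
  unfold bar_seq, shift in A. rewrite Nat.add_0_r in A. pose proof (Hb 0%nat). lia.
Qed.

Lemma Psi_Omega_Vseq M y : (1 <= M)%nat -> in_Vseq_star y ->
  in_Omega M (Psi M y) /\ in_Vseq M (Psi M y).
Proof.
  intros HM [Hy [Hy0 HV]]. split; [apply Psi_from_Omega; auto|apply Psi_Vseq_iff; auto].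
Qed.

Lemma base_of_Psi_spec M y : (1 <= M)%nat -> in_Vseq_star y ->
  1 < base_of M (Psi M y) <= INR M + 1 /\ alpha M (base_of M (Psi M y)) = Psi M y.
Proof.
  intros HM Hy. destruct (Psi_Omega_Vseq M y HM Hy). apply base_of_spec; auto.
Qed.

Lemma Psi_lt_iff M y z : (1 <= M)%nat -> binary y -> binary z ->
  (lex_lt (Psi M y) (Psi M z) <-> lex_lt y z).
Proof. intros. split; intros. eapply (Psi_from_lex_lt_rev M 0); eauto. apply Psi_from_lex_lt; auto. Qed.

Lemma Psi_le_iff M y z : (1 <= M)%nat -> binary y -> binary z ->
  (lex_le (Psi M y) (Psi M z) <-> lex_le y z).
Proof. intros. split; intros. eapply (Psi_from_lex_le_rev M 0); eauto. apply Psi_from_lex_le; auto. Qed.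

Lemma hatPhi_Psi M q y : (1 <= M)%nat -> in_Vseq_star y ->
  alpha M q = Psi M y -> hatPhi M q = base_of 1 y.
Proof.
  intros HM Hy Ea. destruct (base_of1_spec y Hy) as [[Hp _] Ep].
  pose proof Hy as [Hyb [Hy0 _]].
  unfold hatPhi.
  assert (Ex : exists p, 1 < p <= 2 /\
    exists y', Phi_rel M (alpha M q) y' /\ forall i, alpha 1 p i = y' i).
  { exists (base_of 1 y). split; [simpl in Hp; lra|].
    exists y. split; [rewrite Ea; apply Phi_rel_Psi; auto|rewrite Ep; auto]. }
  destruct (epsilon_spec (inhabits 0) _ Ex) as [H1 [y' [Hr Hy']]].
  destruct (Phi_rel_inv M _ _ HM Hr) as [Hb' [_ Hx']].
  assert (E : forall i, y i = y' i).
  { apply (Psi_from_inj M 0 y y' HM (Nat.le_0_l 1) Hyb Hb'). intros i.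
    change (Psi M y i = Psi M y' i). rewrite <- Ea. auto. }
  apply (alpha_inj 1); [simpl; lra|exact Hp|].
  rewrite Ep. apply functional_extensionality. intros i; rewrite Hy', E; reflexivity.
Qed.

Lemma qG_spec M : (1 <= M)%nat ->
  1 < qG M <= INR M + 1 /\ alpha M (qG M) = periodic (unit_lift M).
Proof. intros HM. apply base_of_spec; auto using unit_seq_Omega, unit_seq_Vseq. Qed.

Lemma qprime_seq1_Vseq_star n : in_Vseq_star (qprime_seq 1 n).
Proof. split; [|split]; auto using qprime_seq1_binary, qprime_seq1_head, qprime_seq1_Vseq. Qed.

Lemma qprime_spec M n : (1 <= M)%nat ->
  1 < qprime M (S n) <= INR M + 1 /\ alpha M (qprime M (S n)) = Psi M (qprime_seq 1 n).
Proof.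
  intros HM. unfold qprime.
  replace (qprime_seq M (S n)) with (Psi M (qprime_seq 1 n)).
  - apply base_of_Psi_spec; auto using qprime_seq1_Vseq_star.
  - apply functional_extensionality. intros j. apply Psi_qprime_seq; auto.
Qed.

Lemma qprime1_spec n :
  1 < qprime 1 (S n) <= INR 1 + 1 /\ alpha 1 (qprime 1 (S n)) = qprime_seq 1 (S n).
Proof. unfold qprime. apply base_of_spec; auto; [apply qprime_seq1_binary|apply qprime_seq1_Vseq]. Qed.

Lemma qT_spec M : (1 <= M)%nat -> 1 < qT M <= INR M + 1 /\ alpha M (qT M) = Psi M ones.
Proof.
  intros HM. unfold qT.
  replace ones with (qprime_seq 1 0) by (apply functional_extensionality; apply qprime_seq1_0).
  apply qprime_spec; auto.
Qed.

Lemma lex_le_ones y : binary y -> lex_le y ones.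
Proof. intros Hy. apply lex_le_pointwise. intros i; apply Hy. Qed.

Lemma qG_lt_qprime M n : (1 <= M)%nat -> qG M < qprime M (S n).
Proof.
  intros HM. destruct (qG_spec M HM) as [HG EG]. destruct (qprime_spec M n HM) as [HQ EQ].
  apply (alpha_lt_iff M _ _ HG HQ). rewrite EG, EQ. apply unit_seq_lt_Psi, qprime_seq1_head; auto.
Qed.

Lemma qprime_le_qT M n : (1 <= M)%nat -> qprime M (S n) <= qT M.
Proof.
  intros HM. destruct (qT_spec M HM) as [HT ET]. destruct (qprime_spec M n HM) as [HQ EQ].
  apply (alpha_le_iff M _ _ HQ HT). rewrite ET, EQ.
  apply Psi_from_lex_le; auto using ones_binary, qprime_seq1_binary, lex_le_ones.
Qed.

Lemma dom_alpha_Psi M q : (1 <= M)%nat -> in_dom M q ->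
  exists y, in_Vseq_star y /\ alpha M q = Psi M y /\ hatPhi M q = base_of 1 y.
Proof.
  intros HM [[H1 H2] [Hq HV]].
  destruct (qG_spec M HM) as [HG EG]. destruct (qT_spec M HM) as [HT ET].
  assert (L1 : lex_lt (periodic (unit_lift M)) (alpha M q)) by (rewrite <- EG; apply alpha_lt_iff; auto).
  assert (L2 : lex_le (alpha M q) (Psi M ones)) by (rewrite <- ET; apply alpha_le_iff; auto).
  destruct (Psi_onto M (alpha M q) HM (alpha_Omega M q Hq) HV L1 L2) as [y [Hy [Hy0 Ex]]].
  assert (E : alpha M q = Psi M y) by (apply functional_extensionality; auto).
  assert (Hys : in_Vseq_star y).
  { split; [exact Hy|split; [exact Hy0|]]. apply (Psi_Vseq_iff M y HM Hy Hy0). rewrite <- E. exact HV. }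
  exists y. split; [exact Hys|split; [exact E|apply hatPhi_Psi; auto]].
Qed.

Lemma hatPhi_well_defined M q : (1 <= M)%nat -> in_dom M q ->
  exists y, Phi_rel M (alpha M q) y /\ forall i, alpha 1 (hatPhi M q) i = y i.
Proof.
  intros HM Hq. destruct (dom_alpha_Psi M q HM Hq) as [y [Hy [E Eh]]].
  pose proof Hy as [Hyb [Hy0 _]].
  exists y. split; [rewrite E; apply Phi_rel_Psi; auto|].
  rewrite Eh, (proj2 (base_of1_spec y Hy)). reflexivity.
Qed.

Lemma hatPhi_increasing M q1 q2 : (1 <= M)%nat -> in_dom M q1 -> in_dom M q2 ->
  q1 < q2 -> hatPhi M q1 < hatPhi M q2.
Proof.
  intros HM H1 H2 Hlt.
  destruct (dom_alpha_Psi M q1 HM H1) as [y1 [Hy1 [E1 Eh1]]].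
  destruct (dom_alpha_Psi M q2 HM H2) as [y2 [Hy2 [E2 Eh2]]].
  destruct (base_of1_spec y1 Hy1) as [[Hp1 _] Ep1]. destruct (base_of1_spec y2 Hy2) as [[Hp2 _] Ep2].
  rewrite Eh1, Eh2. apply (alpha_lt_iff 1 _ _ Hp1 Hp2). rewrite Ep1, Ep2.
  apply (Psi_lt_iff M); try apply Hy1; try apply Hy2; auto.
  rewrite <- E1, <- E2. apply alpha_lt_iff; auto; [apply H1|apply H2].
Qed.

Lemma hatPhi_in_V1 M q : (1 <= M)%nat -> in_dom M q -> in_V 1 (hatPhi M q).
Proof.
  intros HM Hq. destruct (dom_alpha_Psi M q HM Hq) as [y [Hy [_ Eh]]].
  rewrite Eh. apply base_of1_spec, Hy.
Qed.

Lemma hatPhi_onto M p : (1 <= M)%nat -> in_V 1 p ->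
  exists q, in_dom M q /\ hatPhi M q = p /\ alpha M q = Psi M (alpha 1 p).
Proof.
  intros HM Hp. pose proof (alpha1_Vseq_star p Hp) as Hy. set (y := alpha 1 p) in *.
  destruct (base_of_Psi_spec M y HM Hy) as [Hq Eq]. set (q := base_of M (Psi M y)) in *.
  destruct (qG_spec M HM) as [HG EG]. destruct (qT_spec M HM) as [HT ET].
  exists q. split; [|split; [|exact Eq]].
  - split; [split|split; [exact Hq|rewrite Eq; apply Psi_Omega_Vseq; auto]].
    + apply (alpha_lt_iff M _ _ HG Hq). rewrite EG, Eq. apply unit_seq_lt_Psi; [exact HM|apply Hy].
    + apply (alpha_le_iff M _ _ Hq HT). rewrite ET, Eq.
      apply Psi_from_lex_le; auto using ones_binary; [apply Hy|apply lex_le_ones, Hy].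
  - rewrite (hatPhi_Psi M q y HM Hy Eq). apply base_of_alpha; auto.
Qed.

Lemma hatPhi_qKL M : (1 <= M)%nat -> hatPhi M (qKL M) = qKL 1.
Proof.
  intros HM. assert (Hk : in_Vseq_star (kl_seq 1)).
  { split; [|split]; auto using kl_seq1_binary, kl_seq1_head, kl_seq1_Vseq. }
  unfold qKL. replace (kl_seq M) with (Psi M (kl_seq 1))
    by (apply functional_extensionality; intros j; apply Psi_kl_seq; auto).
  apply hatPhi_Psi; auto. apply base_of_Psi_spec; auto.
Qed.

Lemma in_I_Psi M n q y : (1 <= M)%nat -> 1 < q <= INR M + 1 -> in_Vseq_star y ->
  alpha M q = Psi M y -> (in_I M (S n) q <-> in_I 1 n (base_of 1 y)).
Proof.
  intros HM Hq Hy E. destruct (base_of1_spec y Hy) as [[Hp _] Ep]. pose proof Hy as [Hyb _].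
  destruct (qprime_spec M n HM) as [HQ1 EQ1]. destruct (qprime_spec M (S n) HM) as [HQ2 EQ2].
  destruct (qprime1_spec n) as [HP1 EP1].
  assert (Upper : q <= qprime M (S n) <-> base_of 1 y <= qprime 1 n).
  { rewrite (alpha_le_iff M q _ Hq HQ1), E, EQ1, (Psi_le_iff M y _ HM Hyb (qprime_seq1_binary n)).
    destruct n as [|n].
    - replace (qprime_seq 1 0) with ones
        by (apply functional_extensionality; intros; symmetry; apply qprime_seq1_0).
      simpl qprime. simpl INR in Hp. split; intros _; [lra|apply lex_le_ones; auto].
    - destruct (qprime1_spec n) as [HP0 EP0].
      rewrite (alpha_le_iff 1 _ _ Hp HP0), Ep, EP0. reflexivity. }
  assert (Lower : qprime M (S (S n)) < q <-> qprime 1 (S n) < base_of 1 y).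
  { rewrite (alpha_lt_iff M _ q HQ2 Hq), E, EQ2, (Psi_lt_iff M _ y HM (qprime_seq1_binary (S n)) Hyb).
    rewrite (alpha_lt_iff 1 _ _ HP1 Hp), Ep, EP1. reflexivity. }
  unfold in_I. rewrite Upper, Lower. reflexivity.
Qed.

Lemma hatPhi_I M n p : (1 <= M)%nat ->
  (exists q, in_I M (S n) q /\ in_V M q /\ hatPhi M q = p) <-> (in_I 1 n p /\ in_V 1 p).
Proof.
  intros HM. split.
  - intros [q [HI [HV Eh]]].
    assert (Hd : in_dom M q).
    { split; [|exact HV]. destruct HI as [HI1 HI2]. split.
      - apply Rlt_trans with (qprime M (S (S n))); auto using qG_lt_qprime.
      - apply Rle_trans with (qprime M (S n)); auto using qprime_le_qT. }
    destruct (dom_alpha_Psi M q HM Hd) as [y [Hy [E Eh']]].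
    rewrite <- Eh, Eh'. split; [|apply base_of1_spec, Hy].
    apply (in_I_Psi M n q y HM (proj1 HV) Hy E), HI.
  - intros [HI Hp]. destruct (hatPhi_onto M p HM Hp) as [q [Hd [Eh E]]].
    exists q. split; [|split; [apply Hd|exact Eh]].
    apply (in_I_Psi M n q (alpha 1 p) HM (proj1 (proj2 Hd)) (alpha1_Vseq_star p Hp) E).
    rewrite base_of_alpha; auto.
Qed.

Theorem lemma3p1 (M : nat) (HM : (1 <= M)%nat) :
  (* (i) hatPhi is (well defined,) increasing and a bijection of
     (q_G, q_T] cap V onto V^* *)
  ((forall q, in_dom M q ->
      exists y, Phi_rel M (alpha M q) y /\ forall i, alpha 1 (hatPhi M q) i = y i) /\
   (forall q1 q2, in_dom M q1 -> in_dom M q2 -> q1 < q2 -> hatPhi M q1 < hatPhi M q2) /\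
   (forall q, in_dom M q -> in_V 1 (hatPhi M q)) /\
   (forall p, in_V 1 p -> exists q, in_dom M q /\ hatPhi M q = p)) /\
  (* (ii) *)
  hatPhi M (qKL M) = qKL 1 /\
  (* (iii) *)
  (forall n : nat, forall p,
     (exists q, in_I M (S n) q /\ in_V M q /\ hatPhi M q = p) <->
     (in_I 1 n p /\ in_V 1 p)).
Proof.
  split; [split; [|split; [|split]]|split].
  - intros q; apply hatPhi_well_defined; auto.
  - intros q1 q2; apply hatPhi_increasing; auto.
  - intros q; apply hatPhi_in_V1; auto.
  - intros p Hp. destruct (hatPhi_onto M p HM Hp) as [q [Hq [Eh _]]]. exists q; auto.
  - apply hatPhi_qKL; auto.
  - intros n p; apply hatPhi_I; auto.
Qed.
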